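(* Fix $r_0,u_0,\Lambda>0$ and $(\mathring g,\mathring\lambda_g,\mathring e_g)\in D$. There exist $\varepsilon>0$ and a constant $C>0$ depending only on $r_0,u_0,\mathring g,\Lambda$ (and not on $\mathring f$) such that for every $(\mathring f,\mathring\lambda_f,\mathring e_f)\in D$ with $d:=\|\mathring f-\mathring g\|_{L^\infty}<\varepsilon$: $$\|\mathring\lambda_f\|_{L^\infty}\le C,\qquad \|\mathring e_f\|_{L^\infty}\le C,$$ and each of the quantities $$\|e^{\mathring\lambda_f}-e^{\mathring\lambda_g}\|_{L^\infty},\ \|e^{\mathring\lambda_f}\mathring e_f-e^{\mathring\lambda_g}\mathring e_g\|_{L^\infty},\ \|\mathring e_f-\mathring e_g\|_{L^\infty},\ \|\mathring\lambda_f-\mathring\lambda_g\|_{L^\infty},\ \|e^{2\mathring\lambda_f}\mathring e_f^2-e^{2\mathring\lambda_g}\mathring e_g^2\|_{L^\infty},\ \|e^{2\mathring\lambda_f}-e^{2\mathring\lambda_g}\|_{L^\infty}$$ is bounded by $Cd$.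
   Context: Units with gravitational constant and speed of light equal to $1$; $q\in\mathbb R$ is a fixed charge parameter. For $x\in\mathbb R^3$ write $r=|x|$. A function $h(x,v)$ on $\mathbb R^6$ is spherically symmetric if $h(Ax,Av)=h(x,v)$ for all $A\in SO(3)$. Constraint equations for initial data: given $\mathring f\ge 0$, functions $\mathring\lambda(r),\mathring\mu(r),\mathring e(r)$ on $[0,\infty)$ with $e^{-2\mathring\lambda}(2r\mathring\lambda'-1)+1=8\pi r^2\mathring\rho$, $e^{-2\mathring\lambda}(2r\mathring\mu'-1)+1=8\pi r^2\mathring p$, $\partial_r(r^2e^{\mathring\lambda}\mathring e)=qr^2e^{\mathring\lambda}\mathring M$, where $\mathring\rho=\int_{\mathbb R^3}\mathring f\sqrt{1+|v|^2}\,dv+\tfrac12 e^{2\mathring\lambda}\mathring e^2$, $\mathring p=\int_{\mathbb R^3}(\tfrac{x\cdot v}{r})^2\mathring f\,\tfrac{dv}{\sqrt{1+|v|^2}}-\tfrac12 e^{2\mathring\lambda}\mathring e^2$, $\mathring M=\int_{\mathbb R^3}\mathring f\,dv$; a regular solution of the constraints additionally has $\mathring\lambda\ge0$, $\mathring\mu\le0$, these functions $C^1$, and $\lim_{r\to\infty}\mathring\lambda=\lim_{r\to\infty}\mathring\mu=\mathring\lambda(0)=\lim_{r\to\infty}\mathring e=\mathring e(0)=0$. For $r_0,u_0,\Lambda>0$, $D$ is the set of triples $(\mathring f,\mathring\lambda,\mathring e)$ with $\mathring f\in C^\infty(\mathbb R^6)$ nonnegative, spherically symmetric, $\operatorname{supp}\mathring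 f\subset B(r_0)\times B(u_0)$, satisfying $8\pi\int_0^r s^2\int_{\mathbb R^3}\mathring f(s,v)\sqrt{1+|v|^2}\,dv\,ds<r$ for all $r>0$, and such that $(\mathring\lambda,\mathring e)$ (with the corresponding $\mathring\mu$) is a regular solution of the constraint equations with $\|\mathring\lambda\|_{L^\infty}\le\Lambda$. *)

From Stdlib Require Import Reals.
From Coquelicot Require Import Coquelicot.
Open Scope R_scope.

Definition R3 : Type := (R * R * R)%type.
Definition c1 (x : R3) : R := fst (fst x).
Definition c2 (x : R3) : R := snd (fst x).
Definition c3 (x : R3) : R := snd x.
Definition dot3 (x y : R3) : R := c1 x * c1 y + c2 x * c2 y + c3 x * c3 y.
Definition norm3 (x : R3) : R := sqrt (dot3 x x).

Definition mat3 : Type := nat -> nat -> R.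
Definition mapply (A : mat3) (x : R3) : R3 :=
  (A 0%nat 0%nat * c1 x + A 0%nat 1%nat * c2 x + A 0%nat 2%nat * c3 x,
   A 1%nat 0%nat * c1 x + A 1%nat 1%nat * c2 x + A 1%nat 2%nat * c3 x,
   A 2%nat 0%nat * c1 x + A 2%nat 1%nat * c2 x + A 2%nat 2%nat * c3 x).
Definition det3 (A : mat3) : R :=
  A 0%nat 0%nat * (A 1%nat 1%nat * A 2%nat 2%nat - A 1%nat 2%nat * A 2%nat 1%nat)
  - A 0%nat 1%nat * (A 1%nat 0%nat * A 2%nat 2%nat - A 1%nat 2%nat * A 2%nat 0%nat)
  + A 0%nat 2%nat * (A 1%nat 0%nat * A 2%nat 1%nat - A 1%nat 1%nat * A 2%nat 0%nat).
Definition in_SO3 (A : mat3) : Prop :=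
  (forall i j : nat, (i < 3)%nat -> (j < 3)%nat ->
     A 0%nat i * A 0%nat j + A 1%nat i * A 1%nat j + A 2%nat i * A 2%nat j
     = if Nat.eqb i j then 1 else 0)
  /\ det3 A = 1.

Definition spherically_symmetric (h : R3 -> R3 -> R) : Prop :=
  forall A : mat3, in_SO3 A -> forall x v : R3, h (mapply A x) (mapply A v) = h x v.

Definition get6 (i : nat) (p : R3 * R3) : R :=
  match i with
  | 0%nat => c1 (fst p) | 1%nat => c2 (fst p) | 2%nat => c3 (fst p)
  | 3%nat => c1 (snd p) | 4%nat => c2 (snd p) | _ => c3 (snd p)
  end.
Definition set6 (i : nat) (p : R3 * R3) (t : R) : R3 * R3 :=
  let '((x1, x2, x3), (v1, v2, v3)) := p in
  match i with
  | 0%nat => ((t, x2, x3), (v1, v2, v3))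
  | 1%nat => ((x1, t, x3), (v1, v2, v3))
  | 2%nat => ((x1, x2, t), (v1, v2, v3))
  | 3%nat => ((x1, x2, x3), (t, v2, v3))
  | 4%nat => ((x1, x2, x3), (v1, t, v3))
  | _ => ((x1, x2, x3), (v1, v2, t))
  end.
Definition partial6 (i : nat) (h : R3 * R3 -> R) (p : R3 * R3) : R :=
  Derive (fun t => h (set6 i p t)) (get6 i p).

Fixpoint Ck6 (k : nat) (h : R3 * R3 -> R) : Prop :=
  (forall p : R3 * R3, continuous h p) /\
  match k with
  | 0%nat => True
  | S k' => forall i : nat, (i < 6)%nat ->
       (forall p : R3 * R3, ex_derive (fun t => h (set6 i p t)) (get6 i p))
       /\ Ck6 k' (partial6 i h)
  end.
Definition smooth6 (f : R3 -> R3 -> R) : Prop :=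
  forall k : nat, Ck6 k (fun p => f (fst p) (snd p)).

Definition dist3 (x y : R3) : R :=
  sqrt ((c1 x - c1 y) ^ 2 + (c2 x - c2 y) ^ 2 + (c3 x - c3 y) ^ 2).

Definition in_support (f : R3 -> R3 -> R) (x v : R3) : Prop :=
  forall eps : R, 0 < eps -> exists x' v' : R3,
    f x' v' <> 0 /\ dist3 x x' < eps /\ dist3 v v' < eps.

Definition support_in (f : R3 -> R3 -> R) (r0 u0 : R) : Prop :=
  forall x v : R3, in_support f x v -> norm3 x < r0 /\ norm3 v < u0.

Definition int3 (h : R3 -> R) : R :=
  RInt_gen (fun a =>
    RInt_gen (fun b =>
      RInt_gen (fun c => h (a, b, c))
        (Rbar_locally m_infty) (Rbar_locally p_infty))
      (Rbar_locally m_infty) (Rbar_locally p_infty))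
    (Rbar_locally m_infty) (Rbar_locally p_infty).

(** By spherical symmetry, quantities at radius r are evaluated at x = (r,0,0). *)
Definition xr (r : R) : R3 := (r, 0, 0).

Definition kin_density (f : R3 -> R3 -> R) (r : R) : R :=
  int3 (fun v => f (xr r) v * sqrt (1 + dot3 v v)).
Definition kin_pressure (f : R3 -> R3 -> R) (r : R) : R :=
  int3 (fun v => (dot3 (xr r) v / r) ^ 2 * f (xr r) v / sqrt (1 + dot3 v v)).
Definition charge_density (f : R3 -> R3 -> R) (r : R) : R :=
  int3 (fun v => f (xr r) v).

Definition rho (f : R3 -> R3 -> R) (lam e : R -> R) (r : R) : R :=
  kin_density f r + / 2 * exp (2 * lam r) * (e r) ^ 2.
Definition pres (f : R3 -> R3 -> R) (lam e : R -> R) (r : R) : R :=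
  kin_pressure f r - / 2 * exp (2 * lam r) * (e r) ^ 2.

Definition C1_half (h : R -> R) : Prop :=
  exists dh : R -> R,
    (forall r, 0 < r -> is_derive h r (dh r)) /\
    filterlim (fun s => (h s - h 0) / s) (at_right 0) (locally (dh 0)) /\
    (forall r, 0 <= r ->
       filterlim dh (within (fun s => 0 <= s) (locally r)) (locally (dh r))).

Definition regular_solution (q : R) (f : R3 -> R3 -> R) (lam mu e : R -> R) : Prop :=
  (forall r, 0 < r ->
     exp (-2 * lam r) * (2 * r * Derive lam r - 1) + 1
       = 8 * PI * r ^ 2 * rho f lam e r) /\
  (forall r, 0 < r ->
     exp (-2 * lam r) * (2 * r * Derive mu r - 1) + 1
       = 8 * PI * r ^ 2 * pres f lam e r) /\
  (forall r, 0 < r ->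
     Derive (fun s => s ^ 2 * exp (lam s) * e s) r
       = q * r ^ 2 * exp (lam r) * charge_density f r) /\
  (forall r, 0 <= r -> 0 <= lam r) /\
  (forall r, 0 <= r -> mu r <= 0) /\
  C1_half lam /\ C1_half mu /\ C1_half e /\
  is_lim lam p_infty 0 /\ is_lim mu p_infty 0 /\ lam 0 = 0 /\
  is_lim e p_infty 0 /\ e 0 = 0.

(** Sup norms (L^oo norms of continuous functions), valued in Rbar *)
Definition sup6 (h : R3 -> R3 -> R) : Rbar :=
  Lub_Rbar (fun y => exists x v : R3, y = Rabs (h x v)).
Definition sup_half (h : R -> R) : Rbar :=
  Lub_Rbar (fun y => exists r : R, 0 <= r /\ y = Rabs (h r)).

Definition in_D (q r0 u0 Lam : R) (f : R3 -> R3 -> R) (lam e : R -> R) : Prop :=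
  smooth6 f /\
  (forall x v, 0 <= f x v) /\
  spherically_symmetric f /\
  support_in f r0 u0 /\
  (forall r, 0 < r ->
     8 * PI * RInt (fun s => s ^ 2 * kin_density f s) 0 r < r) /\
  (exists mu : R -> R, regular_solution q f lam mu e) /\
  Rbar_le (sup_half lam) (Finite Lam).

(* Write P = r^2 e^lam e for the enclosed charge and m = r (1 - e^(-2 lam)) for twice the Hawking
   mass. Maxwell's equation gives P' = q r^2 e^lam M, Einstein's gives
   m' = 8 pi r^2 kin + 4 pi r^2 (e^lam e)^2, and lam is recovered from e^(-2 lam) = 1 - m / r,
   which is Lipschitz as long as 0 <= lam <= Lam. The densities kin and M depend Lipschitz
   continuously on f, since f is supported in a fixed ball in v. On the support r <= r0 the
   differences of P and m between two solutions are thus bounded by d plus the integral of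
   |lam_f - lam_g|, and Gronwall's lemma bounds lam_f - lam_g by C d. Beyond r0 the densities
   vanish, P is constant and m' = 4 pi P^2 / r^2, so the bounds extend to all radii. All constants
   depend only on q, r0, u0, Lam and a bound for the charge density of g, which (for d < 1) also
   bounds that of f up to a constant. *)

From Pilot Require Import Defs.
From Stdlib Require Import Reals Lra Classical ClassicalEpsilon FunctionalExtensionality.
From Coquelicot Require Import Coquelicot.
Import Pilot.Defs.
Open Scope R_scope.

Ltac nonneg :=
  repeat match goal with
  | |- 0 <= _ + _ => apply Rplus_le_le_0_compat
  | |- 0 <= _ * _ => apply Rmult_le_pos
  | |- 0 <= _ / _ => apply Rmult_le_pos
  | |- 0 <= / _ => apply Rlt_le, Rinv_0_lt_compat
  | |- 0 <= _ ^ _ => apply pow_le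
  | |- 0 <= Rabs _ => apply Rabs_pos
  | |- 0 <= exp _ => apply Rlt_le, exp_pos
  | |- 0 <= PI => apply Rlt_le, PI_RGT_0
  end; try lra.

Definition right_continuous_at (F : R -> R) (a : R) : Prop :=
  forall eps, 0 < eps -> exists del, 0 < del /\
    forall s, a < s < a + del -> Rabs (F s - F a) < eps.

Lemma continuous_right_continuous_at F a : continuous F a -> right_continuous_at F a.
Proof.
  intros HF eps Heps. apply filterlim_locally with (eps := mkposreal eps Heps) in HF.
  destruct HF as [d Hd]. exists d. split; [apply cond_pos|].
  intros s Hs. apply (Hd s). change (Rabs (s - a) < d). rewrite Rabs_right; lra.
Qed.

Lemma ex_derive_continuous_R (F : R -> R) a : ex_derive F a -> continuous F a.
Proof. apply (@ex_derive_continuous R_AbsRing R_NormedModule). Qed.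

Lemma right_continuous_at_of_ex_derive F a : ex_derive F a -> right_continuous_at F a.
Proof. intro H. apply continuous_right_continuous_at, ex_derive_continuous_R, H. Qed.

Lemma right_continuous_at_scal k F a :
  right_continuous_at F a -> right_continuous_at (fun x => k * F x) a.
Proof.
  intros HF eps Heps. set (c := Rabs k + 1).
  assert (Hc : 0 < c) by (unfold c; pose proof (Rabs_pos k); lra).
  destruct (HF (eps / c)) as [del [Hdel P]]; [apply Rdiv_lt_0_compat; lra|].
  exists del. split; [lra|]. intros s Hs. specialize (P s Hs).
  replace (k * F s - k * F a) with (k * (F s - F a)) by ring. rewrite Rabs_mult.
  pose proof (Rabs_pos (F s - F a)). pose proof (Rle_abs k).
  apply Rle_lt_trans with (c * Rabs (F s - F a)); [unfold c; nra|].
  replace eps with (c * (eps / c)) by (field; lra). apply Rmult_lt_compat_l; lra.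
Qed.

Lemma right_continuous_at_of_linear_bound F a del A : 0 < del ->
  (forall s, a < s < a + del -> Rabs (F s - F a) <= A * (s - a)) ->
  right_continuous_at F a.
Proof.
  intros Hdel HA eps Heps. set (k := Rabs A + 1).
  assert (Hk : 0 < k) by (unfold k; pose proof (Rabs_pos A); lra).
  exists (Rmin del (eps / k)). split; [apply Rmin_pos; [lra | apply Rdiv_lt_0_compat; lra]|].
  intros s Hs. pose proof (Rmin_l del (eps / k)). pose proof (Rmin_r del (eps / k)).
  apply Rle_lt_trans with (k * (s - a)).
  - eapply Rle_trans; [apply HA; lra|]. apply Rmult_le_compat_r; [lra|].
    unfold k. pose proof (Rle_abs A). lra.
  - replace eps with (k * (eps / k)) by (field; lra). apply Rmult_lt_compat_l; lra.
Qed.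

Lemma right_continuous_at_minus F G a :
  right_continuous_at F a -> right_continuous_at G a ->
  right_continuous_at (fun x => F x - G x) a.
Proof.
  intros HF HG eps Heps.
  destruct (HF (eps / 2)) as [d1 [Hd1 P1]]; [lra|].
  destruct (HG (eps / 2)) as [d2 [Hd2 P2]]; [lra|].
  exists (Rmin d1 d2). split; [apply Rmin_pos; lra|].
  intros s Hs. pose proof (Rmin_l d1 d2). pose proof (Rmin_r d1 d2).
  specialize (P1 s ltac:(lra)). specialize (P2 s ltac:(lra)).
  replace (F s - G s - (F a - G a)) with ((F s - F a) - (G s - G a)) by ring.
  eapply Rle_lt_trans; [apply Rabs_triang|]. rewrite Rabs_Ropp. lra.
Qed.

Lemma nondecreasing_of_derive_nonneg (H dH : R -> R) (a b : R) : a < b ->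
  (forall s, a < s <= b -> is_derive H s (dH s)) ->
  right_continuous_at H a ->
  (forall s, a < s <= b -> 0 <= dH s) ->
  H a <= H b.
Proof.
  intros Hab HD HR Hpos. apply Rle_plus_epsilon. intros eps Heps.
  destruct (HR eps Heps) as [del [Hdel Hnear]].
  set (eta := a + Rmin del (b - a) / 2).
  assert (Heta : a < eta < a + del /\ eta < b).
  { unfold eta. pose proof (Rmin_l del (b - a)). pose proof (Rmin_r del (b - a)).
    assert (0 < Rmin del (b - a)) by (apply Rmin_pos; lra). lra. }
  destruct (MVT_gen H eta b dH) as [c [Hc Hmvt]].
  - intros x Hx. rewrite Rmin_left, Rmax_right in Hx by lra. apply HD. lra.
  - intros x Hx. rewrite Rmin_left, Rmax_right in Hx by lra.
    apply continuity_pt_filterlim, ex_derive_continuous_R. exists (dH x). apply HD. lra.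
  - rewrite Rmin_left, Rmax_right in Hc by lra.
    assert (0 <= dH c * (b - eta)) by (apply Rmult_le_pos; [apply Hpos|]; lra).
    specialize (Hnear eta ltac:(lra)). apply Rabs_def2 in Hnear. lra.
Qed.

Lemma derive_comparison_abs (F G dF dG : R -> R) (a b : R) : a < b ->
  (forall s, a < s <= b -> is_derive F s (dF s)) ->
  (forall s, a < s <= b -> is_derive G s (dG s)) ->
  right_continuous_at F a -> right_continuous_at G a ->
  (forall s, a < s <= b -> Rabs (dF s) <= dG s) ->
  Rabs (F b - F a) <= G b - G a.
Proof.
  intros Hab HF HG RF RG Hd.
  assert (Hmono : forall k, (k = 1 \/ k = -1) -> G a - k * F a <= G b - k * F b).
  { intros k Hk.
    apply (nondecreasing_of_derive_nonneg (fun x => G x - k * F x) (fun s => dG s - k * dF s)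
             a b Hab).
    - intros s Hs. apply (is_derive_minus G (fun x => k * F x)); [apply HG; lra|].
      apply (is_derive_scal F s k). apply HF. lra.
    - apply right_continuous_at_minus; [exact RG | apply right_continuous_at_scal, RF].
    - intros s Hs. specialize (Hd s Hs). apply Rabs_le_between in Hd.
      destruct Hk; subst k; lra. }
  pose proof (Hmono 1 (or_introl eq_refl)). pose proof (Hmono (-1) (or_intror eq_refl)).
  apply Rabs_le. lra.
Qed.

Lemma derive_comparison_abs_from_0 (F G dF dG : R -> R) (r : R) : 0 < r ->
  F 0 = 0 -> G 0 = 0 ->
  (forall s, 0 < s <= r -> is_derive F s (dF s)) ->
  (forall s, 0 < s <= r -> is_derive G s (dG s)) ->
  right_continuous_at F 0 -> right_continuous_at G 0 ->
  (forall s, 0 < s <= r -> Rabs (dF s) <= dG s) ->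
  Rabs (F r) <= G r.
Proof.
  intros Hr HF0 HG0.
  replace (F r) with (F r - F 0) by (rewrite HF0; ring).
  replace (G r) with (G r - G 0) by (rewrite HG0; ring).
  apply derive_comparison_abs, Hr.
Qed.

Lemma gronwall_linear (V dV : R -> R) (k1 k2 r : R) : 0 <= k1 -> 0 < k2 -> 0 < r ->
  (forall s, 0 <= s <= r -> is_derive V s (dV s)) -> V 0 = 0 ->
  (forall s, 0 < s <= r -> dV s <= k1 + k2 * V s) ->
  V r <= exp (k2 * r) * (k1 / k2).
Proof.
  intros Hk1 Hk2 Hr HV HV0 Hgrowth.
  set (W := fun s => - (exp (- k2 * s) * (V s + k1 / k2))).
  set (dW := fun s => exp (- k2 * s) * (k1 + k2 * V s - dV s)).
  assert (HW : forall s, 0 <= s <= r -> is_derive W s (dW s)).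
  { intros s Hs. specialize (HV s Hs). unfold W, dW. auto_derive.
    - exists (dV s). exact HV.
    - replace (Derive (fun x => V x) s) with (dV s) by (symmetry; apply is_derive_unique; exact HV).
      field. lra. }
  assert (Hmono : W 0 <= W r).
  { apply (nondecreasing_of_derive_nonneg W dW 0 r Hr); [intros; apply HW; lra| |].
    - apply right_continuous_at_of_ex_derive.
      exists (dW 0). apply HW. lra.
    - intros s Hs. unfold dW. apply Rmult_le_pos; [nonneg|]. specialize (Hgrowth s Hs). lra. }
  unfold W in Hmono. rewrite HV0, Rmult_0_r, exp_0 in Hmono.
  assert (Hinv : exp (k2 * r) * exp (- k2 * r) = 1)
    by (rewrite <- exp_plus, <- exp_0; f_equal; ring).
  assert (0 <= k1 / k2) by nonneg.
  assert (Hbound : V r + k1 / k2 <= exp (k2 * r) * (k1 / k2)).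
  { replace (V r + k1 / k2) with (exp (k2 * r) * (exp (- k2 * r) * (V r + k1 / k2)))
      by (rewrite <- Rmult_assoc, Hinv; ring).
    apply Rmult_le_compat_l; [nonneg | lra]. }
  lra.
Qed.

Lemma continuous_clamp_0 (h : R -> R) : right_continuous_at h 0 ->
  (forall s, 0 < s -> continuous h s) -> forall t, continuous (fun t => h (Rmax 0 t)) t.
Proof.
  intros HR HC t. apply filterlim_locally. intro eps.
  destruct (Rlt_dec 0 t) as [Ht|Ht].
  - specialize (HC t Ht). apply filterlim_locally with (eps := eps) in HC. destruct HC as [d1 Hd1].
    assert (Hp : 0 < Rmin d1 t) by (apply Rmin_pos; [apply cond_pos | lra]).
    exists (mkposreal _ Hp). intros y Hy. change (Rabs (y - t) < Rmin d1 t) in Hy.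
    pose proof (Rmin_l d1 t). pose proof (Rmin_r d1 t). apply Rabs_def2 in Hy.
    rewrite (Rmax_right 0 t), (Rmax_right 0 y) by lra.
    apply Hd1. change (Rabs (y - t) < d1). apply Rabs_def1; lra.
  - destruct (HR eps (cond_pos eps)) as [del [Hdel Hd]].
    assert (Hp : 0 < Rmax del (- t)).
    { pose proof (Rmax_r del (- t)). pose proof (Rmax_l del (- t)).
      destruct (Rlt_dec t 0); lra. }
    exists (mkposreal _ Hp). intros y Hy. change (Rabs (y - t) < Rmax del (- t)) in Hy.
    apply Rabs_def2 in Hy. change (Rabs (h (Rmax 0 y) - h (Rmax 0 t)) < eps).
    rewrite (Rmax_left 0 t) by lra.
    destruct (Rle_dec y 0).
    + rewrite (Rmax_left 0 y), Rminus_diag, Rabs_R0 by lra. apply cond_pos.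
    + rewrite (Rmax_right 0 y) by lra. apply Hd. split; [lra|].
      destruct (Rlt_dec t 0).
      * unfold Rmax in Hy. destruct Rle_dec; lra.
      * assert (t = 0) by lra. subst t. rewrite Rmax_left in Hy by lra. lra.
Qed.

Lemma ex_RInt_of_continuous (g : R -> R) a b : (forall x, continuous g x) -> ex_RInt g a b.
Proof. intro Hg. apply (@ex_RInt_continuous R_CompleteNormedModule). intros; apply Hg. Qed.

(* Clamping at 0 extends [h] continuously to negative arguments, so that the
   fundamental theorem of calculus applies at every point, including 0. *)
Definition abs_integral (h : R -> R) (r : R) : R := RInt (fun t => Rabs (h (Rmax 0 t))) 0 r.

Section AbsIntegral.
Variable h : R -> R.
Hypotheses (Hh0 : right_continuous_at h 0) (Hh : forall s, 0 < s -> continuous h s).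

Let integrand_continuous t : continuous (fun t => Rabs (h (Rmax 0 t))) t.
Proof.
  apply (continuous_comp (fun t => h (Rmax 0 t)) Rabs);
    [apply continuous_clamp_0; assumption | apply continuous_Rabs].
Qed.

Let integrand_integrable a b : ex_RInt (fun t => Rabs (h (Rmax 0 t))) a b.
Proof. apply ex_RInt_of_continuous, integrand_continuous. Qed.

Lemma abs_integral_derive r : is_derive (abs_integral h) r (Rabs (h (Rmax 0 r))).
Proof.
  apply (is_derive_RInt (fun t => Rabs (h (Rmax 0 t))) (abs_integral h) 0 r).
  - apply filter_forall. intro b.
    apply (@RInt_correct R_CompleteNormedModule), integrand_integrable.
  - apply integrand_continuous.
Qed.

Lemma abs_integral_0 : abs_integral h 0 = 0.
Proof. unfold abs_integral. rewrite RInt_point. reflexivity. Qed.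

Lemma abs_integral_monotone s r : 0 <= s <= r -> 0 <= abs_integral h s <= abs_integral h r.
Proof.
  intros Hsr. unfold abs_integral.
  assert (0 <= RInt (fun t => Rabs (h (Rmax 0 t))) 0 s)
    by (apply RInt_ge_0; [lra | apply integrand_integrable | intros; apply Rabs_pos]).
  assert (0 <= RInt (fun t => Rabs (h (Rmax 0 t))) s r)
    by (apply RInt_ge_0; [lra | apply integrand_integrable | intros; apply Rabs_pos]).
  rewrite <- (RInt_Chasles _ 0 s r) by apply integrand_integrable.
  change (plus ?a ?b) with (a + b). lra.
Qed.

End AbsIntegral.

Lemma exp_le_exp_of_le x y : x <= y -> exp x <= exp y.
Proof. intro H. destruct (Req_dec x y) as [->|]; [lra | left; apply exp_increasing; lra]. Qed.

Lemma exp_lipschitz x y L : x <= L -> y <= L -> Rabs (exp x - exp y) <= exp L * Rabs (x - y).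
Proof.
  assert (Key : forall a b, b <= a -> a <= L -> exp a - exp b <= exp L * (a - b)).
  { intros a b Hba HaL. pose proof (exp_ineq1_le (b - a)).
    assert (exp b = exp a * exp (b - a)) by (rewrite <- exp_plus; f_equal; ring).
    pose proof (exp_le_exp_of_le a L HaL). pose proof (exp_pos a). nra. }
  intros Hx Hy. destruct (Rle_dec y x).
  - pose proof (exp_le_exp_of_le y x ltac:(lra)).
    rewrite !Rabs_right by lra. apply Key; lra.
  - pose proof (exp_le_exp_of_le x y ltac:(lra)).
    rewrite !Rabs_left1 by lra. pose proof (Key y x ltac:(lra) Hy). lra.
Qed.

Lemma abs_sub_le_exp_neg2_lipschitz x y L : 0 <= x <= L -> 0 <= y <= L ->
  Rabs (x - y) <= exp (2 * L) / 2 * Rabs (exp (-2 * x) - exp (-2 * y)).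
Proof.
  assert (Key : forall a b, 0 <= b <= a -> a <= L ->
            a - b <= exp (2 * L) / 2 * (exp (-2 * b) - exp (-2 * a))).
  { intros a b Hb HaL. pose proof (exp_ineq1_le (2 * (a - b))).
    assert (exp (-2 * b) = exp (-2 * a) * exp (2 * (a - b)))
      by (rewrite <- exp_plus; f_equal; ring).
    assert (1 <= exp (2 * L) * exp (-2 * a))
      by (rewrite <- exp_plus, <- exp_0; apply exp_le_exp_of_le; lra).
    pose proof (exp_pos (-2 * a)). pose proof (exp_pos (2 * L)). nra. }
  intros Hx Hy. pose proof (exp_pos (2 * L)). destruct (Rle_dec y x).
  - rewrite Rabs_right, Rabs_minus_sym by lra. pose proof (Key x y ltac:(lra) ltac:(lra)).
    pose proof (Rle_abs (exp (-2 * y) - exp (-2 * x))).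
    apply Rle_trans with (exp (2 * L) / 2 * (exp (-2 * y) - exp (-2 * x))); [lra|].
    apply Rmult_le_compat_l; lra.
  - rewrite Rabs_left1 by lra. pose proof (Key y x ltac:(lra) ltac:(lra)).
    pose proof (Rle_abs (exp (-2 * x) - exp (-2 * y))).
    apply Rle_trans with (exp (2 * L) / 2 * (exp (-2 * x) - exp (-2 * y))); [lra|].
    apply Rmult_le_compat_l; lra.
Qed.

Lemma RInt_eq_0_of_vanishing (g : R -> R) a b :
  (forall x, Rmin a b < x < Rmax a b -> g x = 0) -> RInt g a b = 0.
Proof.
  intro H. rewrite (RInt_ext g (fun _ => 0)) by exact H.
  rewrite RInt_const. unfold scal; simpl. unfold mult; simpl. ring.
Qed.

Lemma RInt_gen_of_compact_support (g : R -> R) (u : R) : 0 < u ->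
  (forall a b, ex_RInt g a b) -> (forall x, u <= Rabs x -> g x = 0) ->
  RInt_gen g (Rbar_locally m_infty) (Rbar_locally p_infty) = RInt g (-u) u.
Proof.
  intros Hu Hex Hz. apply is_RInt_gen_unique. intros P [eps HP].
  apply Filter_prod with (fun a => a < -u) (fun b => u < b); [exists (-u); auto | exists u; auto|].
  intros a b Ha Hb. exists (RInt g a b). split; [apply (RInt_correct g a b (Hex a b))|].
  apply HP. replace (RInt g a b) with (RInt g (-u) u); [apply ball_center|].
  rewrite <- (RInt_Chasles g a (-u) b), <- (RInt_Chasles g (-u) u b) by auto.
  rewrite (RInt_eq_0_of_vanishing g a (-u)), (RInt_eq_0_of_vanishing g u b).
  - change (plus 0 (plus ?x 0)) with (0 + (x + 0)). now rewrite Rplus_0_r, Rplus_0_l.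
  - intros x Hx. rewrite Rmin_left, Rmax_right in Hx by lra. apply Hz. rewrite Rabs_right; lra.
  - intros x Hx. rewrite Rmin_left, Rmax_right in Hx by lra. apply Hz. rewrite Rabs_left; lra.
Qed.

Lemma abs_RInt_minus_le (g1 g2 : R -> R) (u B : R) : 0 < u ->
  ex_RInt g1 (-u) u -> ex_RInt g2 (-u) u ->
  (forall x, -u <= x <= u -> Rabs (g1 x - g2 x) <= B) ->
  Rabs (RInt g1 (-u) u - RInt g2 (-u) u) <= 2 * u * B.
Proof.
  intros Hu E1 E2 H.
  change (RInt g1 (-u) u - RInt g2 (-u) u) with (minus (RInt g1 (-u) u) (RInt g2 (-u) u)).
  rewrite <- (RInt_minus g1 g2 (-u) u E1 E2).
  replace (2 * u * B) with ((u - - u) * B) by ring.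
  exact (abs_RInt_le_const _ (-u) u B ltac:(lra) (ex_RInt_minus _ _ _ _ E1 E2) H).
Qed.

Section ParametricIntegral.
Variables (T : UniformSpace) (F : T -> R -> R) (u : R).
Hypotheses (Hu : 0 < u)
  (HF : forall p c, continuous (fun z : T * R => F (fst z) (snd z)) (p, c)).

Lemma continuous_slice p c : continuous (F p) c.
Proof.
  apply (continuous_comp_2 (fun _ : R => p) (fun x : R => x) F c);
    [apply continuous_const | apply continuous_id | apply HF].
Qed.

Lemma slices_uniformly_close p0 (eps : posreal) : exists d : posreal,
  forall p, ball p0 d p -> forall x, -u <= x <= u -> Rabs (F p x - F p0 x) <= 2 * eps.
Proof.
  assert (Hd : forall c : R, exists d : posreal, forall z, ball (p0, c) d z ->
             ball (F p0 c) eps (F (fst z) (snd z))).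
  { intro c. specialize (HF p0 c). apply filterlim_locally with (eps := eps) in HF. exact HF. }
  set (delta := fun c => proj1_sig (constructive_indefinite_description _ (Hd c))).
  assert (Hdelta : forall c z, ball (p0, c) (delta c) z -> ball (F p0 c) eps (F (fst z) (snd z))).
  { intro c. unfold delta.
    destruct (constructive_indefinite_description _ (Hd c)) as [d Hd']. exact Hd'. }
  destruct (compactness_value_1d (-u) u delta) as [d Hcomp].
  exists d. intros p Hp x Hx. apply NNPP. intro Hn. apply (Hcomp x Hx).
  intros [t [_ [Htx Hdt]]]. apply Hn.
  assert (Bx : ball t (delta t) x) by exact Htx.
  assert (A1 : Rabs (F p x - F p0 t) < eps).
  { apply (Hdelta t (p, x)). split; [apply ball_le with d; [lra | exact Hp] | exact Bx]. }
  assert (A2 : Rabs (F p0 x - F p0 t) < eps).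
  { apply (Hdelta t (p0, x)). split; [apply ball_center | exact Bx]. }
  apply Rabs_def2 in A1. apply Rabs_def2 in A2. apply Rabs_le. lra.
Qed.

Lemma continuous_parametric_RInt p0 : continuous (fun p => RInt (F p) (-u) u) p0.
Proof.
  apply filterlim_locally. intro eps.
  assert (He : 0 < eps / (8 * u)) by (apply Rdiv_lt_0_compat; [apply cond_pos | lra]).
  destruct (slices_uniformly_close p0 (mkposreal _ He)) as [d Hd].
  exists d. intros p Hp. change (Rabs (RInt (F p) (-u) u - RInt (F p0) (-u) u) < eps).
  eapply Rle_lt_trans.
  - apply abs_RInt_minus_le; [exact Hu | | | exact (Hd p Hp)];
      apply ex_RInt_of_continuous, continuous_slice.
  - simpl. replace (2 * u * (2 * (eps / (8 * u)))) with (eps / 2) by (field; lra).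
    pose proof (cond_pos eps). lra.
Qed.

End ParametricIntegral.

(* [cube_int H u t] is the iterated integral of [H t] over [-u, u]^3, innermost in the
   last coordinate; the outer integration variables travel in the parameter [p]. *)
Definition cube_int1 (H : R -> R3 -> R) (u : R) (p : R * R * R) : R :=
  RInt (fun c => H (fst (fst p)) (snd (fst p), snd p, c)) (-u) u.
Definition cube_int2 (H : R -> R3 -> R) (u : R) (p : R * R) : R :=
  RInt (fun b => cube_int1 H u (p, b)) (-u) u.
Definition cube_int (H : R -> R3 -> R) (u : R) (t : R) : R :=
  RInt (fun a => cube_int2 H u (t, a)) (-u) u.

Definition jointly_continuous (H : R -> R3 -> R) : Prop := forall t a b c,
  continuous (fun z : R * R * R * R =>
    H (fst (fst (fst z))) (snd (fst (fst z)), snd (fst z), snd z)) (t, a, b, c).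

Definition vanishes_off_cube (H : R -> R3 -> R) (u : R) : Prop := forall t v,
  u <= Rabs (c1 v) \/ u <= Rabs (c2 v) \/ u <= Rabs (c3 v) -> H t v = 0.

Section CubeIntegral.
Variables (H : R -> R3 -> R) (u : R).
Hypotheses (Hu : 0 < u) (HH : jointly_continuous H).

Lemma continuous_cube_int1 p : continuous (cube_int1 H u) p.
Proof.
  apply (continuous_parametric_RInt _ (fun p c => H (fst (fst p)) (snd (fst p), snd p, c)) u Hu).
  intros [[t a] b] c. apply HH.
Qed.

Lemma continuous_cube_int2 p : continuous (cube_int2 H u) p.
Proof.
  apply (continuous_parametric_RInt _ (fun p b => cube_int1 H u (p, b)) u Hu).
  intros p' c. apply continuous_ext with (cube_int1 H u); [intros [x y]; reflexivity|].
  apply continuous_cube_int1.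
Qed.

Lemma continuous_cube_int t : continuous (cube_int H u) t.
Proof.
  apply (continuous_parametric_RInt _ (fun t a => cube_int2 H u (t, a)) u Hu).
  intros p' c. apply continuous_ext with (cube_int2 H u); [intros [x y]; reflexivity|].
  apply continuous_cube_int2.
Qed.

Lemma ex_RInt_cube_slice t a b x y : ex_RInt (fun c => H t (a, b, c)) x y.
Proof.
  apply ex_RInt_of_continuous. intro c.
  refine (continuous_slice _ (fun p c => H (fst (fst p)) (snd (fst p), snd p, c)) _ (t, a, b) c).
  intros [[t' a'] b'] c'. apply HH.
Qed.

Lemma ex_RInt_cube_int1 t a x y : ex_RInt (fun b => cube_int1 H u (t, a, b)) x y.
Proof.
  apply ex_RInt_of_continuous. intro b.
  refine (continuous_slice _ (fun p b => cube_int1 H u (p, b)) _ (t, a) b).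
  intros p c. apply continuous_ext with (cube_int1 H u); [intros [x' y']; reflexivity|].
  apply continuous_cube_int1.
Qed.

Lemma ex_RInt_cube_int2 t x y : ex_RInt (fun a => cube_int2 H u (t, a)) x y.
Proof.
  apply ex_RInt_of_continuous. intro a.
  refine (continuous_slice _ (fun p a => cube_int2 H u (p, a)) _ t a).
  intros p c. apply continuous_ext with (cube_int2 H u); [intros [x' y']; reflexivity|].
  apply continuous_cube_int2.
Qed.

Lemma int3_eq_cube_int : vanishes_off_cube H u -> forall t, int3 (H t) = cube_int H u t.
Proof.
  intros HZ t. unfold int3, cube_int.
  rewrite <- (RInt_gen_of_compact_support _ u Hu (ex_RInt_cube_int2 t)).
  2:{ intros a Ha. apply RInt_eq_0_of_vanishing. intros b _.
      apply RInt_eq_0_of_vanishing. intros c _. apply HZ. auto. }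
  f_equal. apply functional_extensionality. intro a. unfold cube_int2.
  rewrite <- (RInt_gen_of_compact_support _ u Hu (ex_RInt_cube_int1 t a)).
  2:{ intros b Hb. apply RInt_eq_0_of_vanishing. intros c _. apply HZ. auto. }
  f_equal. apply functional_extensionality. intro b. unfold cube_int1.
  apply (RInt_gen_of_compact_support _ u Hu (ex_RInt_cube_slice t a b)).
  intros c Hc. apply HZ. auto.
Qed.

End CubeIntegral.

Lemma cube_int_lipschitz H1 H2 u B : 0 < u -> jointly_continuous H1 -> jointly_continuous H2 ->
  (forall t v, Rabs (H1 t v - H2 t v) <= B) ->
  forall t, Rabs (cube_int H1 u t - cube_int H2 u t) <= 2 * u * (2 * u * (2 * u * B)).
Proof.
  intros Hu C1 C2 HB t. unfold cube_int.
  apply abs_RInt_minus_le; [exact Hu | apply ex_RInt_cube_int2 | apply ex_RInt_cube_int2 |]; auto.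
  intros a _. unfold cube_int2.
  apply abs_RInt_minus_le; [exact Hu | apply ex_RInt_cube_int1 | apply ex_RInt_cube_int1 |]; auto.
  intros b _. unfold cube_int1.
  apply abs_RInt_minus_le; [exact Hu | apply ex_RInt_cube_slice | apply ex_RInt_cube_slice |]; auto.
Qed.

Lemma support_in_vanishes f r0 u0 : support_in f r0 u0 ->
  forall x v, r0 <= norm3 x \/ u0 <= norm3 v -> f x v = 0.
Proof.
  intros Hs x v Hn. apply NNPP. intro Hf.
  assert (Hdist : forall y : R3, dist3 y y = 0)
    by (intro y; unfold dist3; rewrite !Rminus_diag; replace (0 ^ 2 + 0 ^ 2 + 0 ^ 2) with 0 by ring;
        apply sqrt_0).
  destruct (Hs x v) as [Hx Hv]; [|lra].
  intros eps Heps. exists x, v. rewrite !Hdist. auto.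
Qed.

Lemma abs_coords_le_norm3 v :
  Rabs (c1 v) <= norm3 v /\ Rabs (c2 v) <= norm3 v /\ Rabs (c3 v) <= norm3 v.
Proof.
  unfold norm3, dot3.
  repeat split; rewrite <- sqrt_Rsqr_abs; apply sqrt_le_1_alt; unfold Rsqr; nra.
Qed.

Lemma norm3_xr t : norm3 (xr t) = Rabs t.
Proof.
  unfold norm3, dot3, xr, c1, c2, c3; simpl.
  rewrite <- sqrt_Rsqr_abs. f_equal. unfold Rsqr. ring.
Qed.

Lemma continuous_radial_chart z : continuous (fun z : R * R * R * R =>
  (xr (fst (fst (fst z))), (snd (fst (fst z)), snd (fst z), snd z))) z.
Proof.
  apply filterlim_locally. intro eps. exists eps. intros z' Hz'.
  destruct z as [[[t a] b] c], z' as [[[t' a'] b'] c'], Hz' as [[[H1 H2] H3] H4].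
  unfold xr. repeat split; try assumption; apply ball_center.
Qed.

Lemma continuous_c1 (v : R3) : continuous c1 v.
Proof.
  destruct v as [[v1 v2] v3]. apply (continuous_comp fst fst); [apply continuous_fst|].
  apply continuous_fst.
Qed.

Lemma continuous_c2 (v : R3) : continuous c2 v.
Proof.
  destruct v as [[v1 v2] v3]. apply (continuous_comp fst snd); [apply continuous_fst|].
  apply continuous_snd.
Qed.

Lemma continuous_c3 (v : R3) : continuous c3 v.
Proof. destruct v as [[v1 v2] v3]. apply continuous_snd. Qed.

Lemma continuous_energy_weight (v : R3) : continuous (fun v => sqrt (1 + dot3 v v)) v.
Proof.
  apply (continuous_comp (fun v => 1 + dot3 v v) sqrt).
  - unfold dot3. apply (continuous_plus (fun _ => 1)); [apply continuous_const|].
    apply (continuous_plus (fun v : R3 => c1 v * c1 v + c2 v * c2 v) (fun v => c3 v * c3 v));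
      [apply (continuous_plus (fun v : R3 => c1 v * c1 v) (fun v => c2 v * c2 v)) |].
    + apply (continuous_mult c1 c1); apply continuous_c1.
    + apply (continuous_mult c2 c2); apply continuous_c2.
    + apply (continuous_mult c3 c3); apply continuous_c3.
  - apply continuity_pt_filterlim, continuity_pt_sqrt. unfold dot3. nra.
Qed.

Section Densities.
Variables (f : R3 -> R3 -> R) (r0 u0 : R).
Hypotheses (Hr0 : 0 < r0) (Hu0 : 0 < u0) (Hsmooth : smooth6 f) (Hsupp : support_in f r0 u0).

Let charge_integrand : R -> R3 -> R := fun t v => f (xr t) v.
Let kin_integrand : R -> R3 -> R := fun t v => f (xr t) v * sqrt (1 + dot3 v v).

Lemma jointly_continuous_charge_integrand : jointly_continuous charge_integrand.
Proof.
  intros t a b c. destruct (Hsmooth 0%nat) as [Hc _].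
  exact (continuous_comp _ (fun p : R3 * R3 => f (fst p) (snd p)) (t, a, b, c)
           (continuous_radial_chart _) (Hc _)).
Qed.

Lemma jointly_continuous_kin_integrand : jointly_continuous kin_integrand.
Proof.
  intros t a b c. apply (continuous_mult (fun z : R * R * R * R => charge_integrand
    (fst (fst (fst z))) (snd (fst (fst z)), snd (fst z), snd z))).
  - apply jointly_continuous_charge_integrand.
  - apply (continuous_comp (fun z : R * R * R * R => (snd (fst (fst z)), snd (fst z), snd z))
             (fun v => sqrt (1 + dot3 v v))); [|apply continuous_energy_weight].
    apply filterlim_locally. intro eps. exists eps. intros z' Hz'.
    destruct z' as [[[t' a'] b'] c'], Hz' as [[[H1 H2] H3] H4]. repeat split; assumption.
Qed.

Lemma charge_integrand_vanishes_off_cube : vanishes_off_cube charge_integrand u0.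
Proof.
  intros t v Hv. apply (support_in_vanishes f r0 u0 Hsupp). right.
  destruct (abs_coords_le_norm3 v) as [A [B C]]. lra.
Qed.

Lemma kin_integrand_vanishes_off_cube : vanishes_off_cube kin_integrand u0.
Proof.
  intros t v Hv. unfold kin_integrand.
  rewrite (charge_integrand_vanishes_off_cube t v Hv : f (xr t) v = 0). ring.
Qed.

Lemma charge_density_eq_cube_int t : charge_density f t = cube_int charge_integrand u0 t.
Proof.
  exact (int3_eq_cube_int _ u0 Hu0 jointly_continuous_charge_integrand
           charge_integrand_vanishes_off_cube t).
Qed.

Lemma kin_density_eq_cube_int t : kin_density f t = cube_int kin_integrand u0 t.
Proof.
  exact (int3_eq_cube_int _ u0 Hu0 jointly_continuous_kin_integrand
           kin_integrand_vanishes_off_cube t).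
Qed.

Lemma densities_vanish_outside r : r0 <= r -> kin_density f r = 0 /\ charge_density f r = 0.
Proof.
  intro Hr. rewrite kin_density_eq_cube_int, charge_density_eq_cube_int.
  assert (Hz : forall v, f (xr r) v = 0).
  { intro v. apply (support_in_vanishes f r0 u0 Hsupp). left. rewrite norm3_xr, Rabs_right; lra. }
  unfold cube_int, cube_int2, cube_int1, kin_integrand, charge_integrand. simpl.
  split; apply RInt_eq_0_of_vanishing; intros a _; apply RInt_eq_0_of_vanishing; intros b _;
    apply RInt_eq_0_of_vanishing; intros c _; rewrite Hz; ring.
Qed.

Lemma charge_density_bounded :
  exists B, 0 <= B /\ forall r, 0 <= r -> Rabs (charge_density f r) <= B.
Proof.
  set (F := fun t => Rabs (cube_int charge_integrand u0 t)).
  destruct (continuity_ab_maj F 0 r0 ltac:(lra)) as [Mx [HM _]].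
  { intros c _. apply continuity_pt_filterlim. unfold F.
    apply (continuous_comp (cube_int charge_integrand u0) Rabs); [|apply continuous_Rabs].
    apply continuous_cube_int; [exact Hu0 | apply jointly_continuous_charge_integrand]. }
  exists (F Mx). split; [apply Rabs_pos|]. intros r Hr. destruct (Rle_dec r r0).
  - rewrite charge_density_eq_cube_int. apply HM. lra.
  - destruct (densities_vanish_outside r ltac:(lra)) as [_ ->]. rewrite Rabs_R0. apply Rabs_pos.
Qed.

End Densities.

Lemma dot3_le_cube v u : Rabs (c1 v) <= u -> Rabs (c2 v) <= u -> Rabs (c3 v) <= u ->
  dot3 v v <= 3 * u ^ 2.
Proof.
  intros H1 H2 H3. unfold dot3.
  assert (Hsq : forall x, Rabs x <= u -> x * x <= u ^ 2).
  { intros x Hx. rewrite <- (Rabs_right (x * x)) by (apply Rle_ge; nra).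
    rewrite Rabs_mult. pose proof (Rabs_pos x). nra. }
  pose proof (Hsq _ H1). pose proof (Hsq _ H2). pose proof (Hsq _ H3). lra.
Qed.

Section DensityLipschitz.
Variables (f g : R3 -> R3 -> R) (r0 u0 dd : R).
Hypotheses (Hu0 : 0 < u0) (Hsf : smooth6 f) (Hpf : support_in f r0 u0)
  (Hsg : smooth6 g) (Hpg : support_in g r0 u0) (Hd : forall x v, Rabs (f x v - g x v) <= dd).

Lemma charge_density_lipschitz t :
  Rabs (charge_density f t - charge_density g t) <= 8 * u0 ^ 3 * dd.
Proof.
  rewrite (charge_density_eq_cube_int f r0 u0), (charge_density_eq_cube_int g r0 u0) by assumption.
  eapply Rle_trans.
  - apply cube_int_lipschitz; [exact Hu0 | apply jointly_continuous_charge_integrand; assumption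
      | apply jointly_continuous_charge_integrand; assumption | intros; apply Hd].
  - right. ring.
Qed.

Lemma kin_density_lipschitz t :
  Rabs (kin_density f t - kin_density g t) <= 8 * u0 ^ 3 * sqrt (1 + 3 * u0 ^ 2) * dd.
Proof.
  rewrite (kin_density_eq_cube_int f r0 u0), (kin_density_eq_cube_int g r0 u0) by assumption.
  assert (Hdd : 0 <= dd) by (eapply Rle_trans; [apply Rabs_pos | apply (Hd (xr 0) (xr 0))]).
  eapply Rle_trans; [apply (cube_int_lipschitz _ _ u0 (dd * sqrt (1 + 3 * u0 ^ 2)));
    [exact Hu0 | apply jointly_continuous_kin_integrand; assumption
    | apply jointly_continuous_kin_integrand; assumption |] | right; ring].
  intros s v.
  destruct (classic (u0 <= Rabs (c1 v) \/ u0 <= Rabs (c2 v) \/ u0 <= Rabs (c3 v))) as [Hout|Hin].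
  - rewrite (kin_integrand_vanishes_off_cube f r0 u0 Hpf s v Hout),
      (kin_integrand_vanishes_off_cube g r0 u0 Hpg s v Hout), Rminus_diag, Rabs_R0.
    apply Rmult_le_pos; [exact Hdd | apply sqrt_pos].
  - rewrite <- Rmult_minus_distr_r, Rabs_mult, (Rabs_right (sqrt _)) by apply Rle_ge, sqrt_pos.
    apply Rmult_le_compat; [apply Rabs_pos | apply sqrt_pos | apply Hd |].
    apply sqrt_le_1_alt, Rplus_le_compat_l, dot3_le_cube; apply Rlt_le, Rnot_le_lt; tauto.
Qed.

End DensityLipschitz.

Definition enclosed_charge (lam e : R -> R) (s : R) : R := s ^ 2 * exp (lam s) * e s.

Lemma enclosed_charge_0 lam e : enclosed_charge lam e 0 = 0.
Proof. unfold enclosed_charge. ring. Qed.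

Lemma field_eq_enclosed_charge (lam e : R -> R) r : 0 < r ->
  exp (lam r) * e r = enclosed_charge lam e r / r ^ 2.
Proof. intro. unfold enclosed_charge. field. lra. Qed.

Definition mass_function (lam : R -> R) (s : R) : R := s * (1 - exp (-2 * lam s)).

Lemma mass_function_0 lam : mass_function lam 0 = 0.
Proof. unfold mass_function. ring. Qed.

Definition mass_source (lam e kin : R -> R) (s : R) : R :=
  8 * PI * s ^ 2 * kin s + 4 * PI * s ^ 2 * (exp (lam s) * e s) ^ 2.

Lemma e_eq_exp_neg_lam (lam e : R -> R) s : e s = exp (- lam s) * (exp (lam s) * e s).
Proof. rewrite <- Rmult_assoc, <- exp_plus, Rplus_opp_l, exp_0. ring. Qed.

(* What the stability argument uses about a solution of the constraint equations;
   [kin] and [M] stand for the kinetic energy density and the charge density. *)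
Record radial_solution (q r0 Lam BM : R) (lam e M kin : R -> R) : Prop := {
  sol_lam_range : forall r, 0 <= r -> 0 <= lam r <= Lam;
  sol_lam_derivable : forall r, 0 < r -> ex_derive lam r;
  sol_einstein : forall r, 0 < r ->
    exp (-2 * lam r) * (2 * r * Derive lam r - 1) + 1
      = 8 * PI * r ^ 2 * (kin r + / 2 * exp (2 * lam r) * e r ^ 2);
  sol_maxwell : forall r, 0 < r ->
    is_derive (fun s => s ^ 2 * exp (lam s) * e s) r (q * r ^ 2 * exp (lam r) * M r);
  sol_lam_0 : lam 0 = 0;
  sol_e_0 : e 0 = 0;
  sol_lam_right_cont : right_continuous_at lam 0;
  sol_e_right_cont : right_continuous_at e 0;
  sol_densities_vanish : forall r, r0 <= r -> kin r = 0 /\ M r = 0;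
  sol_charge_bound : forall r, 0 <= r -> Rabs (M r) <= BM }.
Arguments sol_lam_range {q r0 Lam BM lam e M kin}.
Arguments sol_lam_derivable {q r0 Lam BM lam e M kin}.
Arguments sol_einstein {q r0 Lam BM lam e M kin}.
Arguments sol_maxwell {q r0 Lam BM lam e M kin}.
Arguments sol_lam_0 {q r0 Lam BM lam e M kin}.
Arguments sol_e_0 {q r0 Lam BM lam e M kin}.
Arguments sol_lam_right_cont {q r0 Lam BM lam e M kin}.
Arguments sol_e_right_cont {q r0 Lam BM lam e M kin}.
Arguments sol_densities_vanish {q r0 Lam BM lam e M kin}.
Arguments sol_charge_bound {q r0 Lam BM lam e M kin}.

Section RadialSolutions.
Variables (q r0 Lam BM : R).
Hypotheses (Hr0 : 0 < r0) (HBM : 0 <= BM).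

Definition charge_growth : R := Rabs q * exp Lam * BM / 3.

Lemma charge_growth_nonneg : 0 <= charge_growth.
Proof. unfold charge_growth. nonneg. Qed.

Section OneSolution.
Variables (lam e M kin : R -> R).
Hypothesis (Hsol : radial_solution q r0 Lam BM lam e M kin).

Lemma exp_lam_le r : 0 <= r -> exp (lam r) <= exp Lam.
Proof. intro Hr. apply exp_le_exp_of_le, (sol_lam_range Hsol r Hr). Qed.

Lemma enclosed_charge_right_cont : right_continuous_at (enclosed_charge lam e) 0.
Proof.
  destruct (sol_e_right_cont Hsol 1 Rlt_0_1) as [del [Hdel Hnear]].
  apply (right_continuous_at_of_linear_bound _ 0 (Rmin del 1) (exp Lam));
    [apply Rmin_pos; lra|].
  intros s Hs. pose proof (Rmin_l del 1). pose proof (Rmin_r del 1).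
  specialize (Hnear s ltac:(lra)). rewrite (sol_e_0 Hsol), Rminus_0_r in Hnear.
  rewrite enclosed_charge_0. unfold enclosed_charge. rewrite !Rminus_0_r, !Rabs_mult.
  rewrite (Rabs_right (s ^ 2)), (Rabs_right (exp _)) by (apply Rle_ge; nonneg).
  pose proof (exp_lam_le s ltac:(lra)). pose proof (exp_pos (lam s)). pose proof (Rabs_pos (e s)).
  assert (s ^ 2 <= s) by nra.
  apply Rle_trans with (s * exp Lam * 1); [|lra].
  apply Rmult_le_compat; [nonneg | apply Rabs_pos | | lra].
  apply Rmult_le_compat; [nonneg | nonneg | assumption | assumption].
Qed.

Lemma abs_charge_source_le s : 0 < s ->
  Rabs (q * s ^ 2 * exp (lam s) * M s) <= 3 * charge_growth * s ^ 2.
Proof.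
  intro Hs. unfold charge_growth. rewrite !Rabs_mult.
  rewrite (Rabs_right (s ^ 2)), (Rabs_right (exp _)) by (apply Rle_ge; nonneg).
  pose proof (exp_lam_le s ltac:(lra)). pose proof (exp_pos (lam s)).
  pose proof (sol_charge_bound Hsol s ltac:(lra)).
  apply Rle_trans with (Rabs q * s ^ 2 * exp Lam * BM); [|right; field].
  apply Rmult_le_compat; [nonneg | nonneg | | assumption].
  apply Rmult_le_compat_l; nonneg.
Qed.

Lemma enclosed_charge_cubic_bound r : 0 < r ->
  Rabs (enclosed_charge lam e r) <= charge_growth * r ^ 3.
Proof.
  intro Hr.
  apply (derive_comparison_abs_from_0 (enclosed_charge lam e) (fun s => charge_growth * s ^ 3)
    (fun s => q * s ^ 2 * exp (lam s) * M s) (fun s => 3 * charge_growth * s ^ 2) r Hr);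
    [apply enclosed_charge_0 | ring | | | | |].
  - intros s Hs. apply (sol_maxwell Hsol). lra.
  - intros s Hs. auto_derive; [easy | ring].
  - exact enclosed_charge_right_cont.
  - apply right_continuous_at_of_ex_derive. auto_derive. easy.
  - intros s Hs. apply abs_charge_source_le. lra.
Qed.

Lemma enclosed_charge_const r : r0 <= r -> enclosed_charge lam e r = enclosed_charge lam e r0.
Proof.
  intro Hr. destruct (Req_dec r r0) as [->|Hne]; [reflexivity|].
  assert (H : Rabs (enclosed_charge lam e r - enclosed_charge lam e r0) <= 0 - 0).
  { apply (derive_comparison_abs _ (fun _ => 0) (fun s => q * s ^ 2 * exp (lam s) * M s)
             (fun _ => 0) r0 r ltac:(lra)).
    - intros s Hs. apply (sol_maxwell Hsol). lra.
    - intros s Hs. apply (is_derive_const (V := R_NormedModule)).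
    - apply right_continuous_at_of_ex_derive.
      eexists. apply (sol_maxwell Hsol). lra.
    - apply continuous_right_continuous_at, continuous_const.
    - intros s Hs. destruct (sol_densities_vanish Hsol s ltac:(lra)) as [_ ->].
      rewrite Rmult_0_r, Rabs_R0. lra. }
  pose proof (Rabs_pos (enclosed_charge lam e r - enclosed_charge lam e r0)).
  apply Rminus_diag_uniq, Rabs_eq_0. lra.
Qed.

Lemma field_strength_bound r : 0 < r -> Rabs (exp (lam r) * e r) <= charge_growth * Rmin r r0.
Proof.
  intro Hr. rewrite field_eq_enclosed_charge by exact Hr.
  pose proof charge_growth_nonneg. assert (Hr2 : 0 < r ^ 2) by (apply pow_lt; lra).
  unfold Rdiv. rewrite Rabs_mult, (Rabs_right (/ r ^ 2)) by (apply Rle_ge; nonneg).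
  apply (Rmult_le_reg_r (r ^ 2)); [exact Hr2|].
  rewrite Rmult_assoc, Rinv_l, Rmult_1_r by lra.
  destruct (Rle_dec r r0).
  - rewrite Rmin_left by assumption.
    replace (charge_growth * r * r ^ 2) with (charge_growth * r ^ 3) by ring.
    apply enclosed_charge_cubic_bound, Hr.
  - rewrite Rmin_right, enclosed_charge_const by lra.
    eapply Rle_trans; [apply enclosed_charge_cubic_bound, Hr0|].
    replace (charge_growth * r0 ^ 3) with (charge_growth * r0 * r0 ^ 2) by ring.
    apply Rmult_le_compat_l; [nonneg|]. apply pow_incr. lra.
Qed.

Lemma mass_function_derive r : 0 < r -> is_derive (mass_function lam) r (mass_source lam e kin r).
Proof.
  intro Hr. pose proof (sol_lam_derivable Hsol r Hr) as Hd. unfold mass_source.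
  replace (8 * PI * r ^ 2 * kin r + 4 * PI * r ^ 2 * (exp (lam r) * e r) ^ 2) with
    ((1 - exp (-2 * lam r)) + r * (2 * Derive lam r * exp (-2 * lam r))).
  - unfold mass_function. auto_derive; [exact Hd|].
    change (Derive (fun x => lam x) r) with (Derive lam r). ring.
  - pose proof (sol_einstein Hsol r Hr) as HE.
    replace ((exp (lam r) * e r) ^ 2) with (exp (2 * lam r) * e r ^ 2)
      by (replace (2 * lam r) with (lam r + lam r) by ring; rewrite exp_plus; ring).
    lra.
Qed.

Lemma mass_function_right_cont : right_continuous_at (mass_function lam) 0.
Proof.
  apply (right_continuous_at_of_linear_bound _ 0 1 1 Rlt_0_1). intros s Hs.
  unfold mass_function. rewrite Rmult_0_l, !Rminus_0_r.
  destruct (sol_lam_range Hsol s ltac:(lra)).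
  assert (exp (-2 * lam s) <= 1) by (rewrite <- exp_0; apply exp_le_exp_of_le; lra).
  pose proof (exp_pos (-2 * lam s)). rewrite Rabs_right by nra. nra.
Qed.

End OneSolution.

Variables (Kk KM : R).
Hypotheses (HKk : 0 <= Kk) (HKM : 0 <= KM).

Definition source_coef_charge : R := Rabs q * r0 ^ 2 * exp Lam * KM.
Definition source_coef_lam : R := Rabs q * r0 ^ 2 * exp Lam * BM.
Definition lam_coef_data : R := exp (2 * Lam) / 2 *
  (8 * PI * Kk / 3 * r0 ^ 2 + 8 * PI * charge_growth * r0 * source_coef_charge * r0).
Definition lam_coef_integral : R :=
  exp (2 * Lam) / 2 * (8 * PI * charge_growth * r0 * source_coef_lam).
Definition gronwall_const : R :=
  exp ((lam_coef_integral + 1) * r0) * (lam_coef_data / (lam_coef_integral + 1)).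
Definition lam_interior_const : R := lam_coef_data + lam_coef_integral * gronwall_const.
Definition charge_cubic_const : R := Rabs q * exp Lam * (KM + BM * lam_interior_const) / 3.
Definition mass_exterior_const : R :=
  2 * r0 * lam_interior_const + 8 * PI * charge_growth * charge_cubic_const * r0 ^ 5.
Definition lam_diff_const : R :=
  lam_interior_const + exp (2 * Lam) / 2 * (mass_exterior_const / r0).

Lemma source_coefs_nonneg : 0 <= source_coef_charge /\ 0 <= source_coef_lam.
Proof. unfold source_coef_charge, source_coef_lam. split; nonneg. Qed.

Lemma lam_coefs_nonneg : 0 <= lam_coef_data /\ 0 <= lam_coef_integral.
Proof.
  pose proof charge_growth_nonneg. destruct source_coefs_nonneg.
  unfold lam_coef_data, lam_coef_integral. split; nonneg.
Qed.

Lemma lam_interior_const_nonneg : 0 <= gronwall_const /\ 0 <= lam_interior_const.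
Proof.
  destruct lam_coefs_nonneg. assert (0 <= gronwall_const) by (unfold gronwall_const; nonneg).
  unfold lam_interior_const. split; nonneg.
Qed.

Lemma charge_cubic_const_nonneg : 0 <= charge_cubic_const.
Proof. destruct lam_interior_const_nonneg. unfold charge_cubic_const. nonneg. Qed.

Lemma lam_diff_const_nonneg : 0 <= lam_diff_const.
Proof.
  destruct lam_interior_const_nonneg. pose proof charge_cubic_const_nonneg.
  pose proof charge_growth_nonneg. unfold lam_diff_const, mass_exterior_const. nonneg.
Qed.

Definition stability_constant : R :=
  1 + Rabs Lam + charge_growth * r0 + lam_diff_const + exp Lam * lam_diff_const
  + charge_cubic_const * r0 + (charge_cubic_const * r0 + charge_growth * r0 * lam_diff_const)
  + 2 * charge_growth * r0 * (charge_cubic_const * r0) + 2 * exp (2 * Lam) * lam_diff_const.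

Lemma stability_constant_pos : 0 < stability_constant.
Proof.
  pose proof charge_growth_nonneg. pose proof charge_cubic_const_nonneg.
  pose proof lam_diff_const_nonneg. unfold stability_constant.
  assert (0 <= Rabs Lam + charge_growth * r0 + lam_diff_const + exp Lam * lam_diff_const
    + charge_cubic_const * r0 + (charge_cubic_const * r0 + charge_growth * r0 * lam_diff_const)
    + 2 * charge_growth * r0 * (charge_cubic_const * r0) + 2 * exp (2 * Lam) * lam_diff_const)
    by nonneg.
  lra.
Qed.

Section Pair.
Variables (lf ef Mf kf lg eg Mg kg : R -> R) (d : R).
Hypotheses (Sf : radial_solution q r0 Lam BM lf ef Mf kf)
  (Sg : radial_solution q r0 Lam BM lg eg Mg kg) (Hd : 0 <= d)
  (Hkin : forall r, 0 <= r -> Rabs (kf r - kg r) <= Kk * d)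
  (Hcharge : forall r, 0 <= r -> Rabs (Mf r - Mg r) <= KM * d).

Let lam_diff s := lf s - lg s.
Let V := abs_integral lam_diff.

Lemma lam_diff_right_cont : right_continuous_at lam_diff 0.
Proof.
  apply right_continuous_at_minus; [apply (sol_lam_right_cont Sf) | apply (sol_lam_right_cont Sg)].
Qed.

Lemma lam_diff_continuous s : 0 < s -> continuous lam_diff s.
Proof.
  intro Hs. apply (continuous_minus lf lg);
    apply ex_derive_continuous_R;
    [apply (sol_lam_derivable Sf) | apply (sol_lam_derivable Sg)]; exact Hs.
Qed.

Lemma abs_integral_lam_diff_derive s : is_derive V s (Rabs (lam_diff (Rmax 0 s))).
Proof. apply abs_integral_derive; [exact lam_diff_right_cont | exact lam_diff_continuous]. Qed.

Lemma abs_integral_lam_diff_monotone s r : 0 <= s <= r -> 0 <= V s <= V r.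
Proof. apply abs_integral_monotone; [exact lam_diff_right_cont | exact lam_diff_continuous]. Qed.

Lemma abs_integral_lam_diff_0 : V 0 = 0.
Proof. apply abs_integral_0. Qed.

Lemma charge_source_diff_le s : 0 < s ->
  Rabs (q * s ^ 2 * exp (lf s) * Mf s - q * s ^ 2 * exp (lg s) * Mg s)
    <= Rabs q * s ^ 2 * exp Lam * (KM * d + BM * Rabs (lam_diff s)).
Proof.
  intro Hs. unfold lam_diff.
  replace (q * s ^ 2 * exp (lf s) * Mf s - q * s ^ 2 * exp (lg s) * Mg s) with
    ((q * s ^ 2) * (exp (lf s) * (Mf s - Mg s) + Mg s * (exp (lf s) - exp (lg s)))) by ring.
  replace (Rabs q * s ^ 2 * exp Lam * (KM * d + BM * Rabs (lf s - lg s))) with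
    (Rabs q * s ^ 2 * (exp Lam * (KM * d) + BM * (exp Lam * Rabs (lf s - lg s)))) by ring.
  rewrite Rabs_mult, Rabs_mult, (Rabs_right (s ^ 2)) by (apply Rle_ge; nonneg).
  apply Rmult_le_compat_l; [nonneg|].
  eapply Rle_trans; [apply Rabs_triang|]. rewrite !Rabs_mult, Rabs_right by (apply Rle_ge; nonneg).
  destruct (sol_lam_range Sf s ltac:(lra)), (sol_lam_range Sg s ltac:(lra)).
  pose proof (exp_lipschitz (lf s) (lg s) Lam ltac:(lra) ltac:(lra)).
  pose proof (sol_charge_bound Sg s ltac:(lra)). pose proof (Hcharge s ltac:(lra)).
  pose proof (exp_le_exp_of_le (lf s) Lam ltac:(lra)).
  apply Rplus_le_compat; apply Rmult_le_compat; nonneg.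
Qed.

Lemma enclosed_charge_diff_le r : 0 < r <= r0 ->
  Rabs (enclosed_charge lf ef r - enclosed_charge lg eg r)
    <= source_coef_charge * d * r + source_coef_lam * V r.
Proof.
  intro Hr. set (A := source_coef_charge * d). set (B := source_coef_lam).
  assert (HV := abs_integral_lam_diff_derive).
  assert (HG : forall s,
    is_derive (fun s => A * s + B * V s) s (A + B * Rabs (lam_diff (Rmax 0 s)))).
  { intro s. specialize (HV s). auto_derive; [exists (Rabs (lam_diff (Rmax 0 s))); exact HV|].
    replace (Derive (fun x => V x) s) with (Rabs (lam_diff (Rmax 0 s)))
      by (symmetry; apply is_derive_unique, HV). ring. }
  apply (derive_comparison_abs_from_0 (fun s => enclosed_charge lf ef s - enclosed_charge lg eg s)
    (fun s => A * s + B * V s)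
    (fun s => q * s ^ 2 * exp (lf s) * Mf s - q * s ^ 2 * exp (lg s) * Mg s)
    (fun s => A + B * Rabs (lam_diff (Rmax 0 s))) r ltac:(lra));
    [rewrite !enclosed_charge_0; ring | rewrite abs_integral_lam_diff_0; ring | | | | |].
  - intros s Hs. apply (is_derive_minus (enclosed_charge lf ef) (enclosed_charge lg eg));
      [apply (sol_maxwell Sf) | apply (sol_maxwell Sg)]; lra.
  - intros s Hs. apply HG.
  - apply right_continuous_at_minus;
      [exact (enclosed_charge_right_cont _ _ _ _ Sf)
      | exact (enclosed_charge_right_cont _ _ _ _ Sg)].
  - apply right_continuous_at_of_ex_derive.
    eexists. apply HG.
  - intros s Hs. rewrite Rmax_right by lra.
    eapply Rle_trans; [apply charge_source_diff_le; lra|].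
    unfold A, B, source_coef_charge, source_coef_lam.
    replace (Rabs q * r0 ^ 2 * exp Lam * KM * d
             + Rabs q * r0 ^ 2 * exp Lam * BM * Rabs (lam_diff s))
      with (Rabs q * r0 ^ 2 * exp Lam * (KM * d + BM * Rabs (lam_diff s))) by ring.
    apply Rmult_le_compat_r; [nonneg|]. apply Rmult_le_compat_r; [nonneg|].
    apply Rmult_le_compat_l; [nonneg|]. apply pow_incr. lra.
Qed.

Lemma field_diff_eq s : 0 < s -> exp (lf s) * ef s - exp (lg s) * eg s
  = (enclosed_charge lf ef s - enclosed_charge lg eg s) / s ^ 2.
Proof. intro Hs. unfold enclosed_charge. field. lra. Qed.

Lemma field_sq_diff_le s : 0 < s <= r0 ->
  4 * PI * s ^ 2 * Rabs ((exp (lf s) * ef s) ^ 2 - (exp (lg s) * eg s) ^ 2)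
    <= 8 * PI * charge_growth * s * Rabs (enclosed_charge lf ef s - enclosed_charge lg eg s).
Proof.
  intro Hs. assert (Hs2 : 0 < s ^ 2) by (apply pow_lt; lra).
  pose proof (field_strength_bound _ _ _ _ Sf s ltac:(lra)) as HEf.
  pose proof (field_strength_bound _ _ _ _ Sg s ltac:(lra)) as HEg.
  rewrite Rmin_left in HEf, HEg by lra.
  replace ((exp (lf s) * ef s) ^ 2 - (exp (lg s) * eg s) ^ 2) with
    ((exp (lf s) * ef s + exp (lg s) * eg s) * (exp (lf s) * ef s - exp (lg s) * eg s)) by ring.
  rewrite field_diff_eq, Rabs_mult by lra. unfold Rdiv.
  rewrite Rabs_mult, (Rabs_right (/ s ^ 2)) by (apply Rle_ge; nonneg).
  assert (Habs : Rabs (exp (lf s) * ef s + exp (lg s) * eg s) <= 2 * charge_growth * s)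
    by (eapply Rle_trans; [apply Rabs_triang | lra]).
  replace (8 * PI * charge_growth * s * Rabs (enclosed_charge lf ef s - enclosed_charge lg eg s))
    with (4 * PI * s ^ 2 * ((2 * charge_growth * s) *
      (Rabs (enclosed_charge lf ef s - enclosed_charge lg eg s) * / s ^ 2))) by (field; lra).
  apply Rmult_le_compat_l; [nonneg|].
  apply Rmult_le_compat_r; [nonneg | exact Habs].
Qed.

Lemma mass_source_diff_le s : 0 < s <= r0 ->
  Rabs (mass_source lf ef kf s - mass_source lg eg kg s)
    <= 8 * PI * Kk * d * s ^ 2
       + 8 * PI * charge_growth * s * Rabs (enclosed_charge lf ef s - enclosed_charge lg eg s).
Proof.
  intro Hs. unfold mass_source.
  replace (8 * PI * s ^ 2 * kf s + 4 * PI * s ^ 2 * (exp (lf s) * ef s) ^ 2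
           - (8 * PI * s ^ 2 * kg s + 4 * PI * s ^ 2 * (exp (lg s) * eg s) ^ 2))
    with (8 * PI * s ^ 2 * (kf s - kg s)
          + 4 * PI * s ^ 2 * ((exp (lf s) * ef s) ^ 2 - (exp (lg s) * eg s) ^ 2)) by ring.
  eapply Rle_trans; [apply Rabs_triang|]. apply Rplus_le_compat.
  - rewrite Rabs_mult, (Rabs_right (8 * PI * s ^ 2)) by (apply Rle_ge; nonneg).
    replace (8 * PI * Kk * d * s ^ 2) with (8 * PI * s ^ 2 * (Kk * d)) by ring.
    apply Rmult_le_compat_l; [nonneg | apply Hkin; lra].
  - rewrite Rabs_mult, (Rabs_right (4 * PI * s ^ 2)) by (apply Rle_ge; nonneg).
    apply field_sq_diff_le, Hs.
Qed.

Lemma mass_diff_le r : 0 < r <= r0 ->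
  Rabs (mass_function lf r - mass_function lg r)
    <= 8 * PI * Kk * d / 3 * r ^ 3
       + 8 * PI * charge_growth * r0 * (source_coef_charge * d * r + source_coef_lam * V r) * r.
Proof.
  intro Hr. pose proof charge_growth_nonneg as Hc.
  set (X := source_coef_charge * d * r + source_coef_lam * V r).
  set (K0 := 8 * PI * charge_growth * r0 * X).
  apply (derive_comparison_abs_from_0 (fun s => mass_function lf s - mass_function lg s)
    (fun s => 8 * PI * Kk * d / 3 * s ^ 3 + K0 * s)
    (fun s => mass_source lf ef kf s - mass_source lg eg kg s)
    (fun s => 8 * PI * Kk * d * s ^ 2 + K0) r ltac:(lra));
    [rewrite !mass_function_0; ring | ring | | | | |].
  - intros s Hs. apply (is_derive_minus (mass_function lf) (mass_function lg));
      [apply (mass_function_derive _ _ _ _ Sf) | apply (mass_function_derive _ _ _ _ Sg)]; lra.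
  - intros s Hs. auto_derive; [easy | field].
  - apply right_continuous_at_minus;
      [exact (mass_function_right_cont _ _ _ _ Sf) | exact (mass_function_right_cont _ _ _ _ Sg)].
  - apply right_continuous_at_of_ex_derive. auto_derive. easy.
  - intros s Hs. eapply Rle_trans; [apply mass_source_diff_le; lra|].
    apply Rplus_le_compat_l. unfold K0.
    assert (HP : Rabs (enclosed_charge lf ef s - enclosed_charge lg eg s) <= X).
    { eapply Rle_trans; [apply enclosed_charge_diff_le; lra|]. unfold X.
      destruct (abs_integral_lam_diff_monotone s r ltac:(lra)).
      destruct source_coefs_nonneg.
      apply Rplus_le_compat; apply Rmult_le_compat_l; nonneg. }
    apply Rmult_le_compat; [nonneg | apply Rabs_pos | | exact HP].
    apply Rmult_le_compat_l; [nonneg | lra].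
Qed.

Lemma lam_diff_le_mass_diff r : 0 < r ->
  Rabs (lam_diff r) <= exp (2 * Lam) / 2 * (Rabs (mass_function lf r - mass_function lg r) / r).
Proof.
  intro Hr. eapply Rle_trans;
    [apply abs_sub_le_exp_neg2_lipschitz;
       [apply (sol_lam_range Sf) | apply (sol_lam_range Sg)]; lra|].
  right. f_equal. unfold mass_function.
  replace (exp (-2 * lf r) - exp (-2 * lg r)) with
    (- ((r * (1 - exp (-2 * lf r)) - r * (1 - exp (-2 * lg r))) / r)) by (field; lra).
  rewrite Rabs_Ropp. unfold Rdiv. rewrite Rabs_mult, (Rabs_right (/ r)) by (apply Rle_ge; nonneg).
  reflexivity.
Qed.

Lemma lam_diff_le_integral r : 0 < r <= r0 ->
  Rabs (lam_diff r) <= lam_coef_data * d + lam_coef_integral * V r.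
Proof.
  intro Hr. eapply Rle_trans; [apply lam_diff_le_mass_diff; lra|].
  pose proof charge_growth_nonneg. destruct (abs_integral_lam_diff_monotone 0 r ltac:(lra)).
  destruct source_coefs_nonneg.
  unfold lam_coef_data, lam_coef_integral.
  apply Rle_trans with (exp (2 * Lam) / 2 *
    ((8 * PI * Kk / 3 * r0 ^ 2 + 8 * PI * charge_growth * r0 * source_coef_charge * r0) * d
     + 8 * PI * charge_growth * r0 * source_coef_lam * V r)); [|right; ring].
  apply Rmult_le_compat_l; [nonneg|].
  apply (Rmult_le_reg_r r); [lra|]. unfold Rdiv.
  rewrite Rmult_assoc, Rinv_l, Rmult_1_r by lra.
  eapply Rle_trans; [apply mass_diff_le, Hr|].
  assert (r ^ 2 <= r0 ^ 2) by (apply pow_incr; lra).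
  set (slack := r * (8 * PI * Kk * d / 3 * (r0 ^ 2 - r ^ 2)
                     + 8 * PI * charge_growth * r0 * source_coef_charge * d * (r0 - r))).
  assert (0 <= slack) by (unfold slack; nonneg).
  match goal with
  | |- ?lhs <= ?rhs => replace rhs with (lhs + slack) by (unfold slack; field; lra)
  end.
  lra.
Qed.

Lemma abs_integral_lam_diff_le r : 0 <= r <= r0 -> V r <= gronwall_const * d.
Proof.
  intro Hr. destruct lam_coefs_nonneg as [Hk1 Hk2].
  destruct (Req_dec r 0) as [->|Hr']; [rewrite abs_integral_lam_diff_0;
    destruct lam_interior_const_nonneg; nonneg|].
  (* Gronwall needs a positive rate, and [lam_coef_integral] vanishes when q = 0. *)
  eapply Rle_trans.
  - apply (gronwall_linear V (fun s => Rabs (lam_diff (Rmax 0 s))) (lam_coef_data * d)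
             (lam_coef_integral + 1) r); [nonneg | lra | lra | | exact abs_integral_lam_diff_0 |].
    + intros s _. apply abs_integral_lam_diff_derive.
    + intros s Hs. rewrite Rmax_right by lra.
      destruct (abs_integral_lam_diff_monotone 0 s ltac:(lra)).
      pose proof (lam_diff_le_integral s ltac:(lra)). lra.
  - unfold gronwall_const.
    replace (exp ((lam_coef_integral + 1) * r0) * (lam_coef_data / (lam_coef_integral + 1)) * d)
      with (exp ((lam_coef_integral + 1) * r0) * (lam_coef_data * d / (lam_coef_integral + 1)))
      by (field; lra).
    apply Rmult_le_compat_r; [nonneg|]. apply exp_le_exp_of_le, Rmult_le_compat_l; lra.
Qed.

Lemma lam_diff_le_interior r : 0 <= r <= r0 -> Rabs (lam_diff r) <= lam_interior_const * d.
Proof.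
  intro Hr. destruct lam_coefs_nonneg, lam_interior_const_nonneg.
  destruct (Req_dec r 0) as [->|Hr'].
  - unfold lam_diff. rewrite (sol_lam_0 Sf), (sol_lam_0 Sg), Rminus_diag, Rabs_R0. nonneg.
  - eapply Rle_trans; [apply lam_diff_le_integral; lra|]. unfold lam_interior_const.
    pose proof (abs_integral_lam_diff_le r Hr).
    apply Rle_trans with (lam_coef_data * d + lam_coef_integral * (gronwall_const * d));
      [apply Rplus_le_compat_l, Rmult_le_compat_l; assumption | right; ring].
Qed.

Lemma enclosed_charge_diff_cubic r : 0 < r <= r0 ->
  Rabs (enclosed_charge lf ef r - enclosed_charge lg eg r) <= charge_cubic_const * d * r ^ 3.
Proof.
  intro Hr. set (K := charge_cubic_const * d).
  apply (derive_comparison_abs_from_0 (fun s => enclosed_charge lf ef s - enclosed_charge lg eg s)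
    (fun s => K * s ^ 3)
    (fun s => q * s ^ 2 * exp (lf s) * Mf s - q * s ^ 2 * exp (lg s) * Mg s)
    (fun s => 3 * K * s ^ 2) r ltac:(lra));
    [rewrite !enclosed_charge_0; ring | ring | | | | |].
  - intros s Hs. apply (is_derive_minus (enclosed_charge lf ef) (enclosed_charge lg eg));
      [apply (sol_maxwell Sf) | apply (sol_maxwell Sg)]; lra.
  - intros s Hs. auto_derive; [easy | ring].
  - apply right_continuous_at_minus;
      [exact (enclosed_charge_right_cont _ _ _ _ Sf)
      | exact (enclosed_charge_right_cont _ _ _ _ Sg)].
  - apply right_continuous_at_of_ex_derive. auto_derive. easy.
  - intros s Hs. eapply Rle_trans; [apply charge_source_diff_le; lra|].
    pose proof (lam_diff_le_interior s ltac:(lra)).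
    unfold K, charge_cubic_const.
    apply Rle_trans with (Rabs q * s ^ 2 * exp Lam * (KM * d + BM * (lam_interior_const * d)));
      [|right; field].
    apply Rmult_le_compat_l; [nonneg|]. apply Rplus_le_compat_l, Rmult_le_compat_l; assumption.
Qed.

Lemma field_diff_le r : 0 < r ->
  Rabs (exp (lf r) * ef r - exp (lg r) * eg r) <= charge_cubic_const * r0 * d.
Proof.
  intro Hr. pose proof charge_cubic_const_nonneg. assert (Hr2 : 0 < r ^ 2) by (apply pow_lt; lra).
  rewrite field_diff_eq by exact Hr. unfold Rdiv.
  rewrite Rabs_mult, (Rabs_right (/ r ^ 2)) by (apply Rle_ge; nonneg).
  apply (Rmult_le_reg_r (r ^ 2)); [exact Hr2|]. rewrite Rmult_assoc, Rinv_l, Rmult_1_r by lra.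
  destruct (Rle_dec r r0).
  - eapply Rle_trans; [apply enclosed_charge_diff_cubic; lra|].
    replace (charge_cubic_const * d * r ^ 3) with (charge_cubic_const * d * r * r ^ 2) by ring.
    apply Rmult_le_compat_r; [nonneg|]. replace (charge_cubic_const * r0 * d) with
      (charge_cubic_const * d * r0) by ring. apply Rmult_le_compat_l; nonneg.
  - rewrite (enclosed_charge_const _ _ _ _ Sf r), (enclosed_charge_const _ _ _ _ Sg r) by lra.
    eapply Rle_trans; [apply enclosed_charge_diff_cubic; lra|].
    replace (charge_cubic_const * d * r0 ^ 3) with (charge_cubic_const * r0 * d * r0 ^ 2) by ring.
    apply Rmult_le_compat_l; [nonneg|]. apply pow_incr. lra.
Qed.

Lemma mass_source_diff_exterior s : r0 < s ->
  Rabs (mass_source lf ef kf s - mass_source lg eg kg s)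
    <= 8 * PI * charge_growth * charge_cubic_const * r0 ^ 6 * d / s ^ 2.
Proof.
  intro Hs. assert (Hs2 : 0 < s ^ 2) by (apply pow_lt; lra).
  pose proof charge_growth_nonneg. pose proof charge_cubic_const_nonneg.
  unfold mass_source.
  destruct (sol_densities_vanish Sf s ltac:(lra)) as [-> _].
  destruct (sol_densities_vanish Sg s ltac:(lra)) as [-> _].
  rewrite !field_eq_enclosed_charge by lra.
  rewrite (enclosed_charge_const _ _ _ _ Sf s), (enclosed_charge_const _ _ _ _ Sg s) by lra.
  set (a := enclosed_charge lf ef r0). set (b := enclosed_charge lg eg r0).
  replace (8 * PI * s ^ 2 * 0 + 4 * PI * s ^ 2 * (a / s ^ 2) ^ 2
           - (8 * PI * s ^ 2 * 0 + 4 * PI * s ^ 2 * (b / s ^ 2) ^ 2))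
    with (4 * PI * ((a + b) * (a - b)) / s ^ 2) by (field; lra).
  unfold Rdiv. rewrite Rabs_mult, (Rabs_right (/ s ^ 2)) by (apply Rle_ge; nonneg).
  apply Rmult_le_compat_r; [nonneg|].
  rewrite Rabs_mult, (Rabs_right (4 * PI)), Rabs_mult by (apply Rle_ge; nonneg).
  assert (Ha : Rabs a <= charge_growth * r0 ^ 3)
    by (apply (enclosed_charge_cubic_bound _ _ _ _ Sf), Hr0).
  assert (Hb : Rabs b <= charge_growth * r0 ^ 3)
    by (apply (enclosed_charge_cubic_bound _ _ _ _ Sg), Hr0).
  assert (Hab : Rabs (a - b) <= charge_cubic_const * d * r0 ^ 3)
    by (apply enclosed_charge_diff_cubic; lra).
  assert (Rabs (a + b) <= 2 * charge_growth * r0 ^ 3)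
    by (eapply Rle_trans; [apply Rabs_triang | lra]).
  apply Rle_trans
    with (4 * PI * ((2 * charge_growth * r0 ^ 3) * (charge_cubic_const * d * r0 ^ 3)));
    [|right; ring].
  apply Rmult_le_compat_l; [nonneg|].
  apply Rmult_le_compat; [apply Rabs_pos | apply Rabs_pos | |]; assumption.
Qed.

Lemma mass_diff_at_support_edge :
  Rabs (mass_function lf r0 - mass_function lg r0) <= 2 * r0 * lam_interior_const * d.
Proof.
  unfold mass_function.
  replace (r0 * (1 - exp (-2 * lf r0)) - r0 * (1 - exp (-2 * lg r0)))
    with (r0 * (exp (-2 * lg r0) - exp (-2 * lf r0))) by ring.
  rewrite Rabs_mult, Rabs_right by lra.
  destruct (sol_lam_range Sf r0 ltac:(lra)), (sol_lam_range Sg r0 ltac:(lra)).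
  eapply Rle_trans; [apply Rmult_le_compat_l; [lra | apply (exp_lipschitz _ _ 0); lra]|].
  rewrite exp_0.
  replace (-2 * lg r0 - -2 * lf r0) with (2 * lam_diff r0) by (unfold lam_diff; ring).
  rewrite Rabs_mult, Rabs_right by lra.
  pose proof (lam_diff_le_interior r0 ltac:(lra)). nra.
Qed.

Lemma mass_diff_tail r : r0 <= r ->
  Rabs (mass_function lf r - mass_function lg r - (mass_function lf r0 - mass_function lg r0))
    <= 8 * PI * charge_growth * charge_cubic_const * r0 ^ 6 * d / r0.
Proof.
  intro Hr. pose proof charge_growth_nonneg. pose proof charge_cubic_const_nonneg.
  set (K := 8 * PI * charge_growth * charge_cubic_const * r0 ^ 6 * d).
  assert (HK : 0 <= K) by (unfold K; nonneg).
  destruct (Req_dec r r0) as [->|Hne]; [rewrite Rminus_diag, Rabs_R0; nonneg|].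
  eapply Rle_trans.
  - apply (derive_comparison_abs (fun s => mass_function lf s - mass_function lg s)
      (fun s => - K / s) (fun s => mass_source lf ef kf s - mass_source lg eg kg s)
      (fun s => K / s ^ 2) r0 r ltac:(lra)).
    + intros s Hs. apply (is_derive_minus (mass_function lf) (mass_function lg));
        [apply (mass_function_derive _ _ _ _ Sf) | apply (mass_function_derive _ _ _ _ Sg)]; lra.
    + intros s Hs. auto_derive; [lra | field; lra].
    + apply continuous_right_continuous_at,
        (continuous_minus (mass_function lf) (mass_function lg));
        apply ex_derive_continuous_R; eexists;
        [apply (mass_function_derive _ _ _ _ Sf) | apply (mass_function_derive _ _ _ _ Sg)]; lra.
    + apply right_continuous_at_of_ex_derive. auto_derive. lra.
    + intros s Hs. apply mass_source_diff_exterior. lra.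
  - assert (0 <= K / r) by nonneg.
    replace (- K / r - - K / r0) with (K / r0 - K / r) by (field; lra). lra.
Qed.

Lemma mass_diff_exterior r : r0 <= r ->
  Rabs (mass_function lf r - mass_function lg r) <= mass_exterior_const * d.
Proof.
  intro Hr. unfold mass_exterior_const.
  replace ((2 * r0 * lam_interior_const + 8 * PI * charge_growth * charge_cubic_const * r0 ^ 5) * d)
    with (2 * r0 * lam_interior_const * d
          + 8 * PI * charge_growth * charge_cubic_const * r0 ^ 6 * d / r0) by (field; lra).
  eapply Rle_trans;
    [|apply Rplus_le_compat; [exact mass_diff_at_support_edge | exact (mass_diff_tail r Hr)]].
  replace (mass_function lf r - mass_function lg r) with
    ((mass_function lf r0 - mass_function lg r0)
     + (mass_function lf r - mass_function lg r - (mass_function lf r0 - mass_function lg r0))) at 1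
    by ring.
  apply Rabs_triang.
Qed.

Lemma lam_diff_le r : 0 <= r -> Rabs (lam_diff r) <= lam_diff_const * d.
Proof.
  intro Hr. destruct lam_interior_const_nonneg. pose proof lam_diff_const_nonneg.
  pose proof charge_growth_nonneg. pose proof charge_cubic_const_nonneg.
  assert (0 <= mass_exterior_const) by (unfold mass_exterior_const; nonneg).
  unfold lam_diff_const. destruct (Rle_dec r r0).
  - eapply Rle_trans; [apply lam_diff_le_interior; lra|].
    apply Rmult_le_compat_r; [exact Hd|].
    assert (0 <= exp (2 * Lam) / 2 * (mass_exterior_const / r0)) by nonneg. lra.
  - eapply Rle_trans; [apply lam_diff_le_mass_diff; lra|].
    pose proof (mass_diff_exterior r ltac:(lra)).
    assert (Rabs (mass_function lf r - mass_function lg r) / r <= mass_exterior_const / r0 * d).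
    { unfold Rdiv. apply Rle_trans with (mass_exterior_const * d * / r).
      - apply Rmult_le_compat_r; nonneg.
      - replace (mass_exterior_const * / r0 * d) with (mass_exterior_const * d * / r0) by ring.
        apply Rmult_le_compat_l; [nonneg|]. apply Rinv_le_contravar; lra. }
    assert (exp (2 * Lam) / 2 * (Rabs (mass_function lf r - mass_function lg r) / r)
            <= exp (2 * Lam) / 2 * (mass_exterior_const / r0) * d).
    { rewrite Rmult_assoc. apply Rmult_le_compat_l; [nonneg | assumption]. }
    nra.
Qed.

Lemma exp_neg_lam_le s : 0 <= s -> 0 < exp (- lf s) <= 1.
Proof.
  intro Hs. destruct (sol_lam_range Sf s Hs). split; [apply exp_pos|].
  rewrite <- exp_0. apply exp_le_exp_of_le. lra.
Qed.

Lemma e_bound r : 0 < r -> Rabs (ef r) <= charge_growth * r0.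
Proof.
  intro Hr. rewrite (e_eq_exp_neg_lam lf ef r), Rabs_mult, Rabs_right
    by (apply Rle_ge, Rlt_le, exp_pos).
  destruct (exp_neg_lam_le r ltac:(lra)).
  pose proof (field_strength_bound _ _ _ _ Sf r Hr). pose proof (Rmin_r r r0).
  pose proof charge_growth_nonneg.
  apply Rle_trans with (1 * (charge_growth * Rmin r r0)); [apply Rmult_le_compat; nonneg|].
  rewrite Rmult_1_l. apply Rmult_le_compat_l; lra.
Qed.

Lemma e_diff_le r : 0 < r ->
  Rabs (ef r - eg r) <= (charge_cubic_const * r0 + charge_growth * r0 * lam_diff_const) * d.
Proof.
  intro Hr. pose proof charge_growth_nonneg. destruct (exp_neg_lam_le r ltac:(lra)).
  destruct (sol_lam_range Sf r ltac:(lra)), (sol_lam_range Sg r ltac:(lra)).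
  rewrite (e_eq_exp_neg_lam lf ef r), (e_eq_exp_neg_lam lg eg r).
  set (Ef := exp (lf r) * ef r). set (Eg := exp (lg r) * eg r).
  replace (exp (- lf r) * Ef - exp (- lg r) * Eg)
    with (exp (- lf r) * (Ef - Eg) + Eg * (exp (- lf r) - exp (- lg r))) by ring.
  eapply Rle_trans; [apply Rabs_triang|]. rewrite Rmult_plus_distr_r. apply Rplus_le_compat.
  - rewrite Rabs_mult, Rabs_right by lra.
    apply Rle_trans with (1 * (charge_cubic_const * r0 * d)); [|lra].
    apply Rmult_le_compat; [lra | apply Rabs_pos | lra | apply field_diff_le, Hr].
  - rewrite Rabs_mult. replace (charge_growth * r0 * lam_diff_const * d)
      with (charge_growth * r0 * (lam_diff_const * d)) by ring.
    apply Rmult_le_compat; [apply Rabs_pos | apply Rabs_pos | |].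
    + pose proof (field_strength_bound _ _ _ _ Sg r Hr). pose proof (Rmin_r r r0).
      eapply Rle_trans; [eassumption|]. apply Rmult_le_compat_l; lra.
    + eapply Rle_trans; [apply (exp_lipschitz _ _ 0); lra|]. rewrite exp_0, Rmult_1_l.
      replace (- lf r - - lg r) with (- lam_diff r) by (unfold lam_diff; ring).
      rewrite Rabs_Ropp. apply lam_diff_le. lra.
Qed.

Lemma field_energy_diff_le r : 0 < r ->
  Rabs (exp (2 * lf r) * ef r ^ 2 - exp (2 * lg r) * eg r ^ 2)
    <= 2 * charge_growth * r0 * (charge_cubic_const * r0) * d.
Proof.
  intro Hr. pose proof charge_growth_nonneg.
  replace (exp (2 * lf r) * ef r ^ 2 - exp (2 * lg r) * eg r ^ 2) with
    ((exp (lf r) * ef r + exp (lg r) * eg r) * (exp (lf r) * ef r - exp (lg r) * eg r))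
    by (replace (2 * lf r) with (lf r + lf r) by ring;
        replace (2 * lg r) with (lg r + lg r) by ring; rewrite !exp_plus; ring).
  replace (2 * charge_growth * r0 * (charge_cubic_const * r0) * d)
    with (2 * charge_growth * r0 * (charge_cubic_const * r0 * d)) by ring.
  rewrite Rabs_mult. apply Rmult_le_compat; [apply Rabs_pos | apply Rabs_pos | |].
  - pose proof (field_strength_bound _ _ _ _ Sf r Hr).
    pose proof (field_strength_bound _ _ _ _ Sg r Hr).
    pose proof (Rmin_r r r0). eapply Rle_trans; [apply Rabs_triang|].
    assert (charge_growth * Rmin r r0 <= charge_growth * r0) by (apply Rmult_le_compat_l; lra). lra.
  - apply field_diff_le, Hr.
Qed.

Lemma exp_lam_diff_le r : 0 <= r ->
  Rabs (exp (lf r) - exp (lg r)) <= exp Lam * lam_diff_const * d.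
Proof.
  intro Hr. destruct (sol_lam_range Sf r Hr), (sol_lam_range Sg r Hr).
  eapply Rle_trans; [apply (exp_lipschitz _ _ Lam); lra|].
  rewrite Rmult_assoc. apply Rmult_le_compat_l; [nonneg | apply lam_diff_le, Hr].
Qed.

Lemma exp_2lam_diff_le r : 0 <= r ->
  Rabs (exp (2 * lf r) - exp (2 * lg r)) <= 2 * exp (2 * Lam) * lam_diff_const * d.
Proof.
  intro Hr. destruct (sol_lam_range Sf r Hr), (sol_lam_range Sg r Hr).
  eapply Rle_trans; [apply (exp_lipschitz _ _ (2 * Lam)); lra|].
  replace (2 * lf r - 2 * lg r) with (2 * lam_diff r) by (unfold lam_diff; ring).
  rewrite Rabs_mult, (Rabs_right 2) by lra.
  replace (2 * exp (2 * Lam) * lam_diff_const * d)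
    with (exp (2 * Lam) * (2 * (lam_diff_const * d))) by ring.
  apply Rmult_le_compat_l; [nonneg|]. pose proof (lam_diff_le r Hr). lra.
Qed.

Lemma pointwise_stability r : 0 <= r ->
  Rabs (lf r) <= stability_constant /\ Rabs (ef r) <= stability_constant /\
  Rabs (exp (lf r) - exp (lg r)) <= stability_constant * d /\
  Rabs (exp (lf r) * ef r - exp (lg r) * eg r) <= stability_constant * d /\
  Rabs (ef r - eg r) <= stability_constant * d /\
  Rabs (lf r - lg r) <= stability_constant * d /\
  Rabs (exp (2 * lf r) * ef r ^ 2 - exp (2 * lg r) * eg r ^ 2) <= stability_constant * d /\
  Rabs (exp (2 * lf r) - exp (2 * lg r)) <= stability_constant * d.
Proof.
  intro Hr. pose proof stability_constant_pos as HC0.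
  destruct (Req_dec r 0) as [->|Hr'].
  { rewrite (sol_lam_0 Sf), (sol_lam_0 Sg), (sol_e_0 Sf), (sol_e_0 Sg).
    repeat split; match goal with |- Rabs ?x <= _ => replace x with 0 by ring end;
      rewrite Rabs_R0; nonneg. }
  pose proof charge_growth_nonneg. pose proof charge_cubic_const_nonneg.
  pose proof lam_diff_const_nonneg. pose proof (Rabs_pos Lam).
  assert (HCd : forall X, 0 <= X -> X <= stability_constant -> X * d <= stability_constant * d)
    by (intros; apply Rmult_le_compat_r; assumption).
  assert (0 <= charge_growth * r0 /\ 0 <= charge_cubic_const * r0 /\
    0 <= exp Lam * lam_diff_const /\ 0 <= exp (2 * Lam) * lam_diff_const /\
    0 <= charge_growth * r0 * lam_diff_const /\
    0 <= 2 * charge_growth * r0 * (charge_cubic_const * r0)) by (repeat split; nonneg).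
  destruct (sol_lam_range Sf r Hr).
  repeat split.
  - rewrite Rabs_right by lra. pose proof (Rle_abs Lam). unfold stability_constant. lra.
  - eapply Rle_trans; [apply e_bound; lra | unfold stability_constant; lra].
  - eapply Rle_trans; [apply exp_lam_diff_le, Hr|].
    apply HCd; [nonneg | unfold stability_constant; lra].
  - eapply Rle_trans; [apply field_diff_le; lra|].
    apply HCd; [nonneg | unfold stability_constant; lra].
  - eapply Rle_trans; [apply e_diff_le; lra|].
    apply HCd; [nonneg | unfold stability_constant; lra].
  - eapply Rle_trans; [apply lam_diff_le, Hr|].
    apply HCd; [nonneg | unfold stability_constant; lra].
  - eapply Rle_trans; [apply field_energy_diff_le; lra|].
    apply HCd; [nonneg | unfold stability_constant; lra].
  - eapply Rle_trans; [apply exp_2lam_diff_le, Hr|].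
    apply HCd; [nonneg | unfold stability_constant; lra].
Qed.

End Pair.
End RadialSolutions.

Lemma sup_half_le (h : R -> R) X :
  (forall r, 0 <= r -> Rabs (h r) <= X) -> Rbar_le (sup_half h) (Finite X).
Proof.
  intro H. destruct (Lub_Rbar_correct (fun y => exists r, 0 <= r /\ y = Rabs (h r))) as [_ Hlub].
  apply Hlub. intros y [r [Hr ->]]. exact (H r Hr).
Qed.

Lemma abs_le_of_sup_half_le (h : R -> R) X r :
  Rbar_le (sup_half h) (Finite X) -> 0 <= r -> Rabs (h r) <= X.
Proof.
  intros H Hr. destruct (Lub_Rbar_correct (fun y => exists r, 0 <= r /\ y = Rabs (h r))) as [Hub _].
  exact (Rbar_le_trans (Finite (Rabs (h r))) _ _ (Hub _ (ex_intro _ r (conj Hr eq_refl))) H).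
Qed.

Lemma sup6_finite (h : R3 -> R3 -> R) eps : Rbar_lt (sup6 h) (Finite eps) ->
  exists dd, sup6 h = Finite dd /\ 0 <= dd /\ forall x v, Rabs (h x v) <= dd.
Proof.
  intro H. unfold sup6 in *.
  destruct (Lub_Rbar_correct (fun y => exists x v : R3, y = Rabs (h x v))) as [Hub _].
  assert (Hall : forall x v, Rbar_le (Finite (Rabs (h x v)))
                   (Lub_Rbar (fun y => exists x v : R3, y = Rabs (h x v))))
    by (intros x v; apply Hub; exists x, v; reflexivity).
  destruct (Lub_Rbar _) as [dd| |]; [| contradiction | exact (False_ind _ (Hall (xr 0) (xr 0)))].
  exists dd. split; [reflexivity|]. split; [|exact Hall].
  eapply Rle_trans; [apply Rabs_pos | exact (Hall (xr 0) (xr 0))].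
Qed.

Lemma C1_half_right_cont h : C1_half h -> right_continuous_at h 0.
Proof.
  intros [dh [_ [Hlim _]]].
  apply filterlim_locally with (eps := mkposreal 1 Rlt_0_1) in Hlim. destruct Hlim as [del Hdel].
  apply (right_continuous_at_of_linear_bound _ 0 del (Rabs (dh 0) + 1)); [apply cond_pos|].
  intros s Hs. rewrite Rminus_0_r.
  assert (Hq : Rabs ((h s - h 0) / s - dh 0) < 1).
  { apply (Hdel s); [|lra]. change (Rabs (s - 0) < del). rewrite Rminus_0_r, Rabs_right; lra. }
  replace (h s - h 0) with (s * ((h s - h 0) / s)) by (field; lra).
  rewrite Rabs_mult, (Rabs_right s), Rmult_comm by lra. apply Rmult_le_compat_r; [lra|].
  replace ((h s - h 0) / s) with (dh 0 + ((h s - h 0) / s - dh 0)) by ring.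
  eapply Rle_trans; [apply Rabs_triang | lra].
Qed.

Lemma in_D_radial_solution q r0 u0 Lam BM f lam e : 0 < r0 -> 0 < u0 ->
  in_D q r0 u0 Lam f lam e -> (forall r, 0 <= r -> Rabs (charge_density f r) <= BM) ->
  radial_solution q r0 Lam BM lam e (charge_density f) (kin_density f).
Proof.
  intros Hr0 Hu0 (Hs & _ & _ & Hsupp & _ & [mu Hreg] & Hsup) HB.
  destruct Hreg as (Hein & _ & Hmax & Hlam & _ & Clam & _ & Ce & _ & _ & Hlam0 & _ & He0).
  assert (Hder : forall h r, C1_half h -> 0 < r -> ex_derive h r)
    by (intros h r [dh [Hdh _]] Hr; exists (dh r); exact (Hdh r Hr)).
  split.
  - intros r Hr. split; [exact (Hlam r Hr)|].
    pose proof (abs_le_of_sup_half_le lam Lam r Hsup Hr) as Hle. apply Rabs_le_between in Hle. lra.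
  - intros r Hr. exact (Hder lam r Clam Hr).
  - exact Hein.
  - intros r Hr. rewrite <- (Hmax r Hr). apply Derive_correct.
    auto_derive. repeat split; auto.
  - exact Hlam0.
  - exact He0.
  - exact (C1_half_right_cont lam Clam).
  - exact (C1_half_right_cont e Ce).
  - intros r Hr. exact (densities_vanish_outside f r0 u0 Hr0 Hu0 Hs Hsupp r Hr).
  - exact HB.
Qed.

Theorem proposition3p1 (q r0 u0 Lam : R) (g : R3 -> R3 -> R) (lam_g e_g : R -> R) :
  0 < r0 -> 0 < u0 -> 0 < Lam ->
  in_D q r0 u0 Lam g lam_g e_g ->
  exists eps C : R, 0 < eps /\ 0 < C /\
    forall (f : R3 -> R3 -> R) (lam_f e_f : R -> R),
      in_D q r0 u0 Lam f lam_f e_f ->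
      let d := sup6 (fun x v => f x v - g x v) in
      Rbar_lt d (Finite eps) ->
      Rbar_le (sup_half lam_f) (Finite C) /\
      Rbar_le (sup_half e_f) (Finite C) /\
      Rbar_le (sup_half (fun r => exp (lam_f r) - exp (lam_g r))) (Rbar_mult C d) /\
      Rbar_le (sup_half (fun r => exp (lam_f r) * e_f r - exp (lam_g r) * e_g r))
              (Rbar_mult C d) /\
      Rbar_le (sup_half (fun r => e_f r - e_g r)) (Rbar_mult C d) /\
      Rbar_le (sup_half (fun r => lam_f r - lam_g r)) (Rbar_mult C d) /\
      Rbar_le (sup_half (fun r => exp (2 * lam_f r) * (e_f r) ^ 2
                                  - exp (2 * lam_g r) * (e_g r) ^ 2))
              (Rbar_mult C d) /\
      Rbar_le (sup_half (fun r => exp (2 * lam_f r) - exp (2 * lam_g r)))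
              (Rbar_mult C d).
Proof.
  intros Hr0 Hu0 _ Hg.
  pose proof Hg as (Hsg & _ & _ & Hpg & _).
  destruct (charge_density_bounded g r0 u0 Hr0 Hu0 Hsg Hpg) as [Bg [HBg HMg]].
  set (KM := 8 * u0 ^ 3). set (Kk := 8 * u0 ^ 3 * sqrt (1 + 3 * u0 ^ 2)).
  assert (HKM : 0 <= KM) by (unfold KM; nonneg).
  assert (HKk : 0 <= Kk) by (unfold Kk; nonneg; apply sqrt_pos).
  set (BM := Bg + KM).
  exists 1, (stability_constant q r0 Lam BM Kk KM).
  split; [lra | split; [apply stability_constant_pos; unfold BM; lra|]].
  intros f lam_f e_f Hf d Hd.
  destruct (sup6_finite _ 1 Hd) as [dd [Edd [Hdd Hfg]]].
  assert (Hdd1 : dd < 1) by (unfold d in Hd; rewrite Edd in Hd; exact Hd).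
  unfold d. rewrite Edd. simpl.
  pose proof Hf as (Hsf & _ & _ & Hpf & _).
  pose proof (charge_density_lipschitz f g r0 u0 dd Hu0 Hsf Hpf Hsg Hpg Hfg) as HM.
  pose proof (kin_density_lipschitz f g r0 u0 dd Hu0 Hsf Hpf Hsg Hpg Hfg) as Hkin.
  assert (Sg := in_D_radial_solution q r0 u0 Lam BM g lam_g e_g Hr0 Hu0 Hg
                  ltac:(intros r Hr; pose proof (HMg r Hr); unfold BM; lra)).
  assert (Sf : radial_solution q r0 Lam BM lam_f e_f (charge_density f) (kin_density f)).
  { apply (in_D_radial_solution q r0 u0 Lam BM f lam_f e_f Hr0 Hu0 Hf). intros r Hr.
    assert (8 * u0 ^ 3 * dd <= KM) by (unfold KM; assert (0 <= 8 * u0 ^ 3) by nonneg; nra).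
    pose proof (HM r). pose proof (HMg r Hr).
    pose proof (Rabs_triang_inv (charge_density f r) (charge_density g r)). unfold BM. lra. }
  pose proof (pointwise_stability q r0 Lam BM Hr0 ltac:(unfold BM; lra) Kk KM HKk HKM
    lam_f e_f _ _ lam_g e_g _ _ dd Sf Sg Hdd (fun r _ => Hkin r) (fun r _ => HM r)) as Hest.
  repeat split; apply sup_half_le; intros r Hr; apply (Hest r Hr).
Qed.
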